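(* Let $\mathbf A\in\mathbb K^{m\times n}$, $\mathbf b\in\mathbb K^m$, $\mathbf c\in\mathbb K^n$ satisfy assumption (A), and let $\boldsymbol\mu\in\mathbb K$ be positive. Then the problem $$\text{minimize } \mathbf c^T\mathbf x-\boldsymbol\mu\Big(\sum_{j=1}^n\log\mathbf x_j+\sum_{i=1}^m\log\mathbf w_i\Big)\quad\text{s.t. } \mathbf A\mathbf x+\mathbf w=\mathbf b,\ \mathbf x>0,\ \mathbf w>0$$ and the problem $$\text{maximize } -\mathbf b^T\mathbf y+\boldsymbol\mu\Big(\sum_{j=1}^n\log\mathbf s_j+\sum_{i=1}^m\log\mathbf y_i\Big)\quad\text{s.t. } -\mathbf A^T\mathbf y+\mathbf s=\mathbf c,\ \mathbf s>0,\ \mathbf y>0,$$ where the variables range over vectors with entries in $\mathbb K$ and objective values are compared in $H(\bar{\mathbb R}_{\exp})$, each have a unique optimal solution. These solutions are $(\mathbf x^{\boldsymbol\mu},\mathbf w^{\boldsymbol\mu})$ and $(\mathbf y^{\boldsymbol\mu},\mathbf s^{\boldsymbol\mu})$ respectively.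
   Context: $\mathbb K$ is the field of germs at $+\infty$ of real functions definable in $\bar{\mathbb R}^{\mathbb R}$, the ordered real field expanded by the power functions $t\mapsto t^r$ ($r\in\mathbb R$; set to $0$ for $t\le0$). It is real closed, with $\mathbf f>0$ iff $\mathbf f(t)>0$ for large $t$. $\bar{\mathbb R}_{\exp}$ is the o-minimal expansion of the ordered real field by the exponential function. $H(\bar{\mathbb R}_{\exp})$ is the ordered field of germs at $+\infty$ of functions definable in $\bar{\mathbb R}_{\exp}$. It contains $\mathbb K$, and for positive $\mathbf f\in\mathbb K$, $\log\mathbf f$ denotes the germ of $t\mapsto\log \mathbf f(t)$, an element of $H(\bar{\mathbb R}_{\exp})$. Assumption (A): there exist $\mathbf x^\circ,\mathbf w^\circ,\mathbf y^\circ,\mathbf s^\circ$ with positive entries in $\mathbb K$ such that $\mathbf A\mathbf x^\circ+\mathbf w^\circ=\mathbf b$ and $-\mathbf A^T\mathbf y^\circ+\mathbf s^\circ=\mathbf c$. $(\mathbf x^{\boldsymbol\mu},\mathbf w^{\boldsymbol\mu},\mathbf y^{\boldsymbol\mu},\mathbf s^{\boldsymbol\mu})$ denotes the unique solution over $\mathbb K$ (which exists under (A)) of $\mathbf A\mathbf x+\mathbf w=\mathbf b$, $-\mathbf A^T\mathbf y+\mathbf s=\mathbf c$, $\mathbf w_i\mathbf y_i=\boldsymbol\mu$ ($i\in[m]$), $\mathbf x_j\mathbf s_j=\boldsymbol\mu$ ($j\in[n]$), $\mathbf x,\mathbf w,\mathbf y,\mathbf s>0$. *)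

From Stdlib Require Import Reals Lra List Arith.
Import ListNotations.
Open Scope R_scope.

Definition rpow (r t : R) : R :=
  if Rlt_dec 0 t then Rpower t r else 0.

(* Terms and first-order formulas of the language of ordered rings expanded by
   the power functions, with real parameters (constants). *)
Inductive term : Type :=
| TVar : nat -> term
| TCst : R -> term
| TAdd : term -> term -> term
| TMul : term -> term -> term
| TOpp : term -> term
| TPow : R -> term -> term.

Inductive formula : Type :=
| FEq : term -> term -> formula
| FLt : term -> term -> formula
| FNot : formula -> formula
| FAnd : formula -> formula -> formula
| FEx : nat -> formula -> formula.

Definition upd (e : nat -> R) (n : nat) (a : R) : nat -> R :=
  fun k => if Nat.eqb k n then a else e k.

Fixpoint teval (e : nat -> R) (u : term) : R :=
  match u with
  | TVar n => e n
  | TCst r => r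
  | TAdd u1 u2 => teval e u1 + teval e u2
  | TMul u1 u2 => teval e u1 * teval e u2
  | TOpp u1 => - teval e u1
  | TPow r u1 => rpow r (teval e u1)
  end.

Fixpoint sat (e : nat -> R) (phi : formula) : Prop :=
  match phi with
  | FEq u1 u2 => teval e u1 = teval e u2
  | FLt u1 u2 => teval e u1 < teval e u2
  | FNot p => ~ sat e p
  | FAnd p q => sat e p /\ sat e q
  | FEx n p => exists a, sat (upd e n a) p
  end.

Definition definable_fun (f : R -> R) : Prop :=
  exists phi : formula, forall e : nat -> R, sat e phi <-> e 1%nat = f (e 0%nat).

Definition eventually (P : R -> Prop) : Prop :=
  exists T : R, forall t, T < t -> P t.

Definition germ_eq (f g : R -> R) : Prop := eventually (fun t => f t = g t).

(* An element of K is represented by a (total) definable function; two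
   representatives denote the same element of K iff they are germ_eq. *)
Definition inK (f : R -> R) : Prop := definable_fun f.

Definition Kpos (f : R -> R) : Prop := eventually (fun t => 0 < f t).

Definition vec := nat -> R -> R.          (* component j, then the variable t *)
Definition mat := nat -> nat -> R -> R.   (* entry (i,j), then t *)

Definition Kvec (n : nat) (v : vec) : Prop := forall j, (j < n)%nat -> inK (v j).
Definition Kmat (m n : nat) (A : mat) : Prop :=
  forall i j, (i < m)%nat -> (j < n)%nat -> inK (A i j).
Definition posvec (n : nat) (v : vec) : Prop := forall j, (j < n)%nat -> Kpos (v j).

Definition rsum (n : nat) (f : nat -> R) : R := fold_right Rplus 0 (map f (seq 0 n)).

Definition primal_eq (m n : nat) (A : mat) (b x w : vec) : Prop :=
  forall i, (i < m)%nat ->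
    germ_eq (fun t => rsum n (fun j => A i j t * x j t) + w i t) (b i).

Definition dual_eq (m n : nat) (A : mat) (c y s : vec) : Prop :=
  forall j, (j < n)%nat ->
    germ_eq (fun t => - rsum m (fun i => A i j t * y i t) + s j t) (c j).

Definition assumptionA (m n : nat) (A : mat) (b c : vec) : Prop :=
  exists x0 w0 y0 s0 : vec,
    Kvec n x0 /\ Kvec m w0 /\ Kvec m y0 /\ Kvec n s0 /\
    posvec n x0 /\ posvec m w0 /\ posvec m y0 /\ posvec n s0 /\
    primal_eq m n A b x0 w0 /\ dual_eq m n A c y0 s0.

Definition central_path (m n : nat) (A : mat) (b c : vec) (mu : R -> R)
  (x w y s : vec) : Prop :=
  Kvec n x /\ Kvec m w /\ Kvec m y /\ Kvec n s /\
  posvec n x /\ posvec m w /\ posvec m y /\ posvec n s /\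
  primal_eq m n A b x w /\ dual_eq m n A c y s /\
  (forall i, (i < m)%nat -> germ_eq (fun t => w i t * y i t) mu) /\
  (forall j, (j < n)%nat -> germ_eq (fun t => x j t * s j t) mu).

Definition primal_feasible (m n : nat) (A : mat) (b : vec) (x w : vec) : Prop :=
  Kvec n x /\ Kvec m w /\ posvec n x /\ posvec m w /\ primal_eq m n A b x w.

Definition dual_feasible (m n : nat) (A : mat) (c : vec) (y s : vec) : Prop :=
  Kvec m y /\ Kvec n s /\ posvec n s /\ posvec m y /\ dual_eq m n A c y s.

(* objective value, as a germ in H(R_exp) (evaluated at t) *)
Definition primal_obj (m n : nat) (c : vec) (mu : R -> R) (x w : vec) (t : R) : R :=
  rsum n (fun j => c j t * x j t)
  - mu t * (rsum n (fun j => ln (x j t)) + rsum m (fun i => ln (w i t))).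

Definition dual_obj (m n : nat) (b : vec) (mu : R -> R) (y s : vec) (t : R) : R :=
  - rsum m (fun i => b i t * y i t)
  + mu t * (rsum n (fun j => ln (s j t)) + rsum m (fun i => ln (y i t))).

(* optimality, comparing objective values in the ordered field H(R_exp):
   f <= g there iff f t <= g t for all large t *)
Definition primal_optimal m n A b c mu (x w : vec) : Prop :=
  primal_feasible m n A b x w /\
  forall x' w', primal_feasible m n A b x' w' ->
    eventually (fun t => primal_obj m n c mu x w t <= primal_obj m n c mu x' w' t).

Definition dual_optimal m n A b c mu (y s : vec) : Prop :=
  dual_feasible m n A c y s /\
  forall y' s', dual_feasible m n A c y' s' ->
    eventually (fun t => dual_obj m n b mu y' s' t <= dual_obj m n b mu y s t).

Definition primal_unique_optimal m n A b c mu (x w : vec) : Prop :=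
  primal_optimal m n A b c mu x w /\
  forall x' w', primal_optimal m n A b c mu x' w' ->
    (forall j, (j < n)%nat -> germ_eq (x' j) (x j)) /\
    (forall i, (i < m)%nat -> germ_eq (w' i) (w i)).

Definition dual_unique_optimal m n A b c mu (y s : vec) : Prop :=
  dual_optimal m n A b c mu y s /\
  forall y' s', dual_optimal m n A b c mu y' s' ->
    (forall i, (i < m)%nat -> germ_eq (y' i) (y i)) /\
    (forall j, (j < n)%nat -> germ_eq (s' j) (s j)).

From Pilot Require Import Defs.
From Stdlib Require Import Reals List Arith.
Open Scope R_scope.
From Stdlib Require Import Lra Lia Classical FunctionalExtensionality ClassicalEpsilon.
From mathcomp Require all_boot all_order all_algebra all_classical all_reals all_analysis.
From mathcomp Require Rstruct Rstruct_topology.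
(* Re-import so that [eventually] refers to germs, not to [Arith.Between.eventually]. *)
Import Pilot.Defs.

(* At each large [t] the data evaluated at [t] form a real barrier problem.  A dual feasible
   point makes the primal objective coercive, so it attains its minimum on a compact sublevel
   set, and the stationarity equations there are the central path equations.  Conversely,
   complementarity turns the objective gap between a central point and any feasible point into
   [mu] times [sum (r - 1 - ln r)] over the coordinate ratios [r], which is nonnegative and
   vanishes only at ratio [1]: the central point is the unique optimum of both problems, and in
   particular it is unique.  Uniqueness makes each coordinate [t |-> x_j(t)] the function whose
   graph is defined by "some central point of the data at [t] has [j]-th coordinate [v]", so the
   central path lives in [K]; optimality in [H(R_exp)] is then checked pointwise for large [t]. *)

Lemma fold_right_Rplus a l : fold_right Rplus a l = fold_right Rplus 0 l + a.
Proof. induction l as [|x l IH]; simpl; [lra | rewrite IH; lra]. Qed.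

Lemma rsum_O f : rsum 0 f = 0.
Proof. reflexivity. Qed.

Lemma rsum_S n f : rsum (S n) f = rsum n f + f n.
Proof.
  unfold rsum. rewrite seq_S, map_app, fold_right_app. simpl.
  rewrite fold_right_Rplus. lra.
Qed.

Lemma rsum_ext n f g : (forall j, (j < n)%nat -> f j = g j) -> rsum n f = rsum n g.
Proof.
  induction n as [|n IH]; intros H; [reflexivity|].
  rewrite !rsum_S, IH by (intros; apply H; lia). rewrite H by lia. reflexivity.
Qed.

Ltac rsum_induction n := induction n as [|n IH]; [rewrite ?rsum_O; lra | rewrite !rsum_S, IH; lra].

Lemma rsum_plus n f g : rsum n (fun j => f j + g j) = rsum n f + rsum n g.
Proof. rsum_induction n. Qed.

Lemma rsum_minus n f g : rsum n (fun j => f j - g j) = rsum n f - rsum n g.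
Proof. rsum_induction n. Qed.

Lemma rsum_opp n f : rsum n (fun j => - f j) = - rsum n f.
Proof. rsum_induction n. Qed.

Lemma rsum_scal_l n k f : rsum n (fun j => k * f j) = k * rsum n f.
Proof. rsum_induction n. Qed.

Lemma rsum_scal_r n k f : rsum n (fun j => f j * k) = rsum n f * k.
Proof. rsum_induction n. Qed.

Lemma rsum_const0 n : rsum n (fun _ => 0) = 0.
Proof. rsum_induction n. Qed.

Lemma rsum_swap n m (f : nat -> nat -> R) :
  rsum n (fun j => rsum m (fun i => f i j)) = rsum m (fun i => rsum n (fun j => f i j)).
Proof.
  induction n as [|n IH].
  - rewrite rsum_O, rsum_const0. reflexivity.
  - rewrite rsum_S, IH, <- rsum_plus. apply rsum_ext. intros. rewrite rsum_S. lra.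
Qed.

Lemma rsum_le n f g : (forall j, (j < n)%nat -> f j <= g j) -> rsum n f <= rsum n g.
Proof.
  induction n as [|n IH]; intros H; [rewrite ?rsum_O; lra|].
  rewrite !rsum_S. pose proof (H n (Nat.lt_succ_diag_r n)).
  assert (rsum n f <= rsum n g) by (apply IH; intros; apply H; lia). lra.
Qed.

Lemma rsum_nonneg n f : (forall j, (j < n)%nat -> 0 <= f j) -> 0 <= rsum n f.
Proof. intros H. rewrite <- (rsum_const0 n). apply rsum_le. auto. Qed.

Lemma rsum_nonneg_term_le n f k :
  (forall j, (j < n)%nat -> 0 <= f j) -> (k < n)%nat -> f k <= rsum n f.
Proof.
  induction n as [|n IH]; intros H Hk; [lia|].
  rewrite rsum_S. destruct (Nat.eq_dec k n) as [->|Hne].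
  - assert (0 <= rsum n f) by (apply rsum_nonneg; intros; apply H; lia). lra.
  - assert (f k <= rsum n f) by (apply IH; [intros; apply H; lia | lia]).
    assert (0 <= f n) by (apply H; lia). lra.
Qed.

Lemma rsum_nonneg_eq0 n f : (forall j, (j < n)%nat -> 0 <= f j) -> rsum n f = 0 ->
  forall j, (j < n)%nat -> f j = 0.
Proof.
  intros H E j Hj. pose proof (rsum_nonneg_term_le n f j H Hj). pose proof (H j Hj). lra.
Qed.

Lemma rsum_delta n k d : (k < n)%nat -> rsum n (fun j => if Nat.eqb j k then d else 0) = d.
Proof.
  induction n as [|n IH]; intros Hk; [lia|].
  rewrite rsum_S. destruct (Nat.eq_dec k n) as [->|Hne].
  - rewrite Nat.eqb_refl, (rsum_ext n _ (fun _ => 0)), rsum_const0; [lra|].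
    intros j Hj. destruct (Nat.eqb_spec j n); [lia | reflexivity].
  - rewrite IH by lia. destruct (Nat.eqb_spec n k); [lia | lra].
Qed.

Lemma eventually_mono (P Q : R -> Prop) :
  (forall t, P t -> Q t) -> eventually P -> eventually Q.
Proof. intros H [T HT]. exists T. auto. Qed.

Lemma eventually_and (P Q : R -> Prop) :
  eventually P -> eventually Q -> eventually (fun t => P t /\ Q t).
Proof.
  intros [T1 H1] [T2 H2]. exists (Rmax T1 T2). intros t Ht.
  pose proof (Rmax_l T1 T2). pose proof (Rmax_r T1 T2).
  split; [apply H1 | apply H2]; lra.
Qed.

Lemma eventually_forall_lt n (P : nat -> R -> Prop) :
  (forall j, (j < n)%nat -> eventually (P j)) ->
  eventually (fun t => forall j, (j < n)%nat -> P j t).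
Proof.
  induction n as [|n IH]; intros H.
  - exists 0. intros. lia.
  - apply (eventually_mono (fun t => (forall j, (j < n)%nat -> P j t) /\ P n t)).
    + intros t [Hlt Hn] j Hj. destruct (Nat.eq_dec j n) as [->|]; [exact Hn | apply Hlt; lia].
    + apply eventually_and; [apply IH; intros; apply H | apply H]; lia.
Qed.

Lemma Rabs_le_inv x e : Rabs x <= e -> - e <= x <= e.
Proof. intros H. pose proof (Rle_abs x). pose proof (Rle_abs (- x)). rewrite Rabs_Ropp in *. lra. Qed.

Lemma ln_le_sub1 r : 0 < r -> ln r <= r - 1.
Proof. intros Hr. pose proof (exp_ineq1_le (ln r)). rewrite exp_ln in H by lra. lra. Qed.

Lemma ln_lt_sub1 r : 0 < r -> r <> 1 -> ln r < r - 1.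
Proof.
  intros Hr Hne. assert (ln r <> 0).
  { intro E. apply Hne. rewrite <- (exp_ln r), E, exp_0 by lra. reflexivity. }
  pose proof (exp_ineq1 (ln r) H). rewrite exp_ln in H0 by lra. lra.
Qed.

Lemma ln_div x y : 0 < x -> 0 < y -> ln (x / y) = ln x - ln y.
Proof. intros. unfold Rdiv. rewrite ln_mult, ln_Rinv; try lra. apply Rinv_0_lt_compat; lra. Qed.

(* [ldev] is the Bregman divergence of [- ln] from [1]; it measures every optimality gap below. *)
Definition ldev (r : R) : R := r - 1 - ln r.

Lemma ldev_ge0 r : 0 < r -> 0 <= ldev r.
Proof. intros. unfold ldev. pose proof (ln_le_sub1 r H). lra. Qed.

Lemma ldev_eq0 r : 0 < r -> ldev r = 0 -> r = 1.
Proof.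
  intros H E. destruct (Req_dec r 1) as [|Hne]; auto.
  pose proof (ln_lt_sub1 r H Hne). unfold ldev in E. lra.
Qed.

Lemma ln_shift_lower v d : 0 < v -> Rabs d <= v / 2 ->
  ln v + d / v - 2 * (d / v) * (d / v) <= ln (v + d).
Proof.
  intros Hv Hd. set (u := d / v).
  assert (Hu : - 1 / 2 <= u <= 1 / 2).
  { apply Rabs_le_inv in Hd. unfold u.
    assert (d / v * v = d) by (field; lra).
    split; apply Rmult_le_reg_r with v; lra. }
  assert (E : v + d = v * (1 + u)) by (unfold u; field; lra).
  rewrite E, ln_mult by lra.
  (* [ln (1 + u) >= 1 - 1 / (1 + u)], and [u / (1 + u) >= u - 2 u^2] on [u >= -1/2] *)
  pose proof (ln_le_sub1 (/ (1 + u)) ltac:(apply Rinv_0_lt_compat; lra)) as L.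
  rewrite ln_Rinv in L by lra.
  assert (u - 2 * u * u <= 1 - / (1 + u)); [|lra].
  assert (1 - / (1 + u) = u / (1 + u)) as -> by (field; lra).
  apply Rmult_le_reg_r with (1 + u); [lra|].
  replace (u / (1 + u) * (1 + u)) with u by (field; lra).
  assert (0 <= u * u * (1 + 2 * u)) by (apply Rmult_le_pos; nra).
  nra.
Qed.

Lemma quadratic_local_min_slope G Q eta : 0 < eta -> 0 <= Q ->
  (forall h, Rabs h <= eta -> 0 <= h * G + h * h * Q) -> G = 0.
Proof.
  intros He HQ H. destruct (Req_dec G 0) as [|HG]; auto. exfalso.
  set (t := Rmin (eta / Rabs G) (/ (2 * (Q + 1)))).
  assert (HaG : 0 < Rabs G) by (apply Rabs_pos_lt; auto).
  assert (Ht0 : 0 < t).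
  { apply Rmin_pos; [apply Rdiv_lt_0_compat; auto | apply Rinv_0_lt_compat; lra]. }
  assert (Ht1 : Rabs G * t <= eta).
  { pose proof (Rmin_l (eta / Rabs G) (/ (2 * (Q + 1)))).
    apply Rmult_le_compat_l with (r := Rabs G) in H0; [|lra].
    replace (Rabs G * (eta / Rabs G)) with eta in H0 by (field; lra). fold t in H0. lra. }
  assert (tQ : t * Q < 1).
  { pose proof (Rmin_r (eta / Rabs G) (/ (2 * (Q + 1)))) as Ht2. fold t in Ht2.
    apply Rmult_le_compat_r with (r := 2 * (Q + 1)) in Ht2; [|lra].
    replace (/ (2 * (Q + 1)) * (2 * (Q + 1))) with 1 in Ht2 by (field; lra). nra. }
  specialize (H (- G * t)).
  rewrite Rabs_mult, Rabs_Ropp, (Rabs_right t) in H by lra.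
  specialize (H Ht1).
  replace (- G * t * G + - G * t * (- G * t) * Q) with (G * G * t * (t * Q - 1)) in H by ring.
  assert (0 < G * G) by (apply Rsqr_pos_lt in HG; exact HG).
  assert (0 < G * G * t) by (apply Rmult_lt_0_compat; auto).
  nra.
Qed.

(** * The barrier problems over the reals *)

Section RealBarrier.

Variables (m n : nat) (a : nat -> nat -> R).

Definition rprimal_feas (b x w : nat -> R) : Prop :=
  (forall j, (j < n)%nat -> 0 < x j) /\ (forall i, (i < m)%nat -> 0 < w i) /\
  (forall i, (i < m)%nat -> rsum n (fun j => a i j * x j) + w i = b i).

Definition rdual_feas (c y s : nat -> R) : Prop :=
  (forall i, (i < m)%nat -> 0 < y i) /\ (forall j, (j < n)%nat -> 0 < s j) /\
  (forall j, (j < n)%nat -> - rsum m (fun i => a i j * y i) + s j = c j).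

Definition rcentral (b c : nat -> R) (mu : R) (x w y s : nat -> R) : Prop :=
  rprimal_feas b x w /\ rdual_feas c y s /\
  (forall i, (i < m)%nat -> w i * y i = mu) /\ (forall j, (j < n)%nat -> x j * s j = mu).

Definition rprimal_obj (c : nat -> R) (mu : R) (x w : nat -> R) : R :=
  rsum n (fun j => c j * x j) - mu * (rsum n (fun j => ln (x j)) + rsum m (fun i => ln (w i))).

Definition rdual_obj (b : nat -> R) (mu : R) (y s : nat -> R) : R :=
  - rsum m (fun i => b i * y i) + mu * (rsum n (fun j => ln (s j)) + rsum m (fun i => ln (y i))).

Lemma cost_dual_slack c y s z :
  (forall j, (j < n)%nat -> - rsum m (fun i => a i j * y i) + s j = c j) ->
  rsum n (fun j => c j * z j) =
  rsum n (fun j => s j * z j) - rsum m (fun i => y i * rsum n (fun j => a i j * z j)).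
Proof.
  intros H.
  rewrite (rsum_ext n (fun j => c j * z j)
             (fun j => s j * z j - rsum m (fun i => a i j * y i * z j))).
  2: { intros j Hj. rewrite <- H, rsum_scal_r by auto. ring. }
  rewrite rsum_minus, rsum_swap. f_equal. apply rsum_ext. intros i Hi.
  rewrite <- rsum_scal_l. apply rsum_ext. intros. ring.
Qed.

Definition ldev_gap (x x' w w' : nat -> R) : R :=
  rsum n (fun j => ldev (x' j / x j)) + rsum m (fun i => ldev (w' i / w i)).

Lemma rprimal_obj_gap b c mu x w y s x' w' :
  rcentral b c mu x w y s -> rprimal_feas b x' w' ->
  rprimal_obj c mu x' w' - rprimal_obj c mu x w = mu * ldev_gap x x' w w'.
Proof.
  intros [[Hx [Hw Hp]] [[Hy [Hs Hd]] [Hwy Hxs]]] [Hx' [Hw' Hp']].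
  (* complementarity turns the change of the linear cost into [mu] times relative changes *)
  assert (Ecost : rsum n (fun j => c j * x' j) - rsum n (fun j => c j * x j) =
               mu * rsum n (fun j => x' j / x j - 1) + mu * rsum m (fun i => w' i / w i - 1)).
  { rewrite <- rsum_minus, (rsum_ext n _ (fun j => c j * (x' j - x j))) by (intros; ring).
    rewrite (cost_dual_slack c y s) by auto.
    rewrite (rsum_ext m (fun i => y i * rsum n (fun j => a i j * (x' j - x j)))
                        (fun i => - (mu * (w' i / w i - 1)))).
    2: { intros i Hi.
         rewrite (rsum_ext n _ (fun j => a i j * x' j - a i j * x j)) by (intros; ring).
         rewrite rsum_minus.
         replace (rsum n (fun j => a i j * x' j)) with (b i - w' i) by (rewrite <- (Hp' i Hi); ring).
         replace (rsum n (fun j => a i j * x j)) with (b i - w i) by (rewrite <- (Hp i Hi); ring).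
         rewrite <- (Hwy i Hi). specialize (Hw i Hi). field. lra. }
    rewrite (rsum_ext n (fun j => s j * (x' j - x j)) (fun j => mu * (x' j / x j - 1))).
    2: { intros j Hj. rewrite <- (Hxs j Hj). specialize (Hx j Hj). field. lra. }
    rewrite rsum_opp, !rsum_scal_l. ring. }
  assert (Ex : rsum n (fun j => ldev (x' j / x j)) =
    rsum n (fun j => x' j / x j - 1) - (rsum n (fun j => ln (x' j)) - rsum n (fun j => ln (x j)))).
  { rewrite <- !rsum_minus. apply rsum_ext. intros j Hj. unfold ldev. rewrite ln_div by auto. ring. }
  assert (Ew : rsum m (fun i => ldev (w' i / w i)) =
    rsum m (fun i => w' i / w i - 1) - (rsum m (fun i => ln (w' i)) - rsum m (fun i => ln (w i)))).
  { rewrite <- !rsum_minus. apply rsum_ext. intros i Hi. unfold ldev. rewrite ln_div by auto. ring. }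
  unfold rprimal_obj, ldev_gap. rewrite Ex, Ew. lra.
Qed.

End RealBarrier.

Lemma rsum_ldev_ge0 N (u u' : nat -> R) :
  (forall l, (l < N)%nat -> 0 < u l /\ 0 < u' l) -> 0 <= rsum N (fun l => ldev (u' l / u l)).
Proof.
  intros Hu. apply rsum_nonneg. intros l Hl. destruct (Hu l Hl).
  apply ldev_ge0, Rdiv_lt_0_compat; auto.
Qed.

Lemma rsum_ldev_eq0 N (u u' : nat -> R) :
  (forall l, (l < N)%nat -> 0 < u l /\ 0 < u' l) -> rsum N (fun l => ldev (u' l / u l)) = 0 ->
  forall k, (k < N)%nat -> u' k = u k.
Proof.
  intros Hu E k Hk. destruct (Hu k Hk) as [Hk1 Hk2].
  assert (Hnn : forall l, (l < N)%nat -> 0 <= ldev (u' l / u l)).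
  { intros l Hl. destruct (Hu l Hl). apply ldev_ge0, Rdiv_lt_0_compat; auto. }
  pose proof (ldev_eq0 _ (Rdiv_lt_0_compat _ _ Hk2 Hk1) (rsum_nonneg_eq0 _ _ Hnn E k Hk)) as E1.
  apply (f_equal (fun r => r * u k)) in E1. unfold Rdiv in E1.
  rewrite Rmult_assoc, Rinv_l, Rmult_1_r, Rmult_1_l in E1 by lra. exact E1.
Qed.

Lemma ldev_gap_ge0 m n x x' w w' :
  (forall j, (j < n)%nat -> 0 < x j /\ 0 < x' j) -> (forall i, (i < m)%nat -> 0 < w i /\ 0 < w' i) ->
  0 <= ldev_gap m n x x' w w'.
Proof.
  intros Hx Hw. unfold ldev_gap.
  pose proof (rsum_ldev_ge0 _ _ _ Hx). pose proof (rsum_ldev_ge0 _ _ _ Hw). lra.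
Qed.

Lemma ldev_gap_eq0 m n x x' w w' :
  (forall j, (j < n)%nat -> 0 < x j /\ 0 < x' j) -> (forall i, (i < m)%nat -> 0 < w i /\ 0 < w' i) ->
  ldev_gap m n x x' w w' <= 0 ->
  (forall j, (j < n)%nat -> x' j = x j) /\ (forall i, (i < m)%nat -> w' i = w i).
Proof.
  intros Hx Hw H. unfold ldev_gap in H.
  pose proof (rsum_ldev_ge0 _ _ _ Hx). pose proof (rsum_ldev_ge0 _ _ _ Hw).
  split; [apply (rsum_ldev_eq0 _ _ _ Hx) | apply (rsum_ldev_eq0 _ _ _ Hw)]; lra.
Qed.

(* The dual problem is the primal problem of the transposed data [(-A^T, c, b)]. *)
Lemma rcentral_transpose m n a b c mu x w y s :
  rcentral m n a b c mu x w y s -> rcentral n m (fun j i => - a i j) c b mu y s x w.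
Proof.
  intros [[Hx [Hw Hp]] [[Hy [Hs Hd]] [Hwy Hxs]]].
  split; [|split; [|split]].
  - split; [auto | split; [auto|]]. intros j Hj. rewrite <- (Hd j Hj).
    rewrite (rsum_ext m _ (fun i => - (a i j * y i))) by (intros; ring). rewrite rsum_opp. ring.
  - split; [auto | split; [auto|]]. intros i Hi. rewrite <- (Hp i Hi).
    rewrite (rsum_ext n _ (fun j => - (a i j * x j))) by (intros; ring). rewrite rsum_opp. ring.
  - intros j Hj. rewrite <- (Hxs j Hj). ring.
  - intros i Hi. rewrite <- (Hwy i Hi). ring.
Qed.

Lemma rdual_feas_transpose m n a c y s :
  rdual_feas m n a c y s -> rprimal_feas n m (fun j i => - a i j) c y s.
Proof.
  intros [Hy [Hs Hd]]. split; [auto | split; [auto|]]. intros j Hj. rewrite <- (Hd j Hj).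
  rewrite (rsum_ext m _ (fun i => - (a i j * y i))) by (intros; ring). rewrite rsum_opp. ring.
Qed.

Lemma rdual_obj_gap m n a b c mu x w y s y' s' :
  rcentral m n a b c mu x w y s -> rdual_feas m n a c y' s' ->
  rdual_obj m n b mu y s - rdual_obj m n b mu y' s' = mu * ldev_gap n m y y' s s'.
Proof.
  intros H H'.
  rewrite <- (rprimal_obj_gap n m _ c b mu y s x w y' s' (rcentral_transpose _ _ _ _ _ _ _ _ _ _ H)
               (rdual_feas_transpose _ _ _ _ _ _ H')).
  unfold rprimal_obj, rdual_obj. ring.
Qed.

Lemma rcentral_unique m n a b c mu x w y s x' w' y' s' : 0 < mu ->
  rcentral m n a b c mu x w y s -> rcentral m n a b c mu x' w' y' s' ->
  (forall j, (j < n)%nat -> x' j = x j) /\ (forall i, (i < m)%nat -> w' i = w i) /\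
  (forall i, (i < m)%nat -> y' i = y i) /\ (forall j, (j < n)%nat -> s' j = s j).
Proof.
  intros Hmu H H'.
  (* each of the two points is optimal for both problems, so both gaps vanish *)
  pose proof (rprimal_obj_gap _ _ _ _ _ _ _ _ _ _ x' w' H (proj1 H')) as G1.
  pose proof (rprimal_obj_gap _ _ _ _ _ _ _ _ _ _ x w H' (proj1 H)) as G2.
  pose proof (rdual_obj_gap _ _ _ _ _ _ _ _ _ _ y' s' H (proj1 (proj2 H'))) as G3.
  pose proof (rdual_obj_gap _ _ _ _ _ _ _ _ _ _ y s H' (proj1 (proj2 H))) as G4.
  destruct H as [[Hx [Hw _]] [[Hy [Hs _]] _]], H' as [[Hx' [Hw' _]] [[Hy' [Hs' _]] _]].
  assert (Px : forall j, (j < n)%nat -> 0 < x j /\ 0 < x' j) by auto.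
  assert (Pw : forall i, (i < m)%nat -> 0 < w i /\ 0 < w' i) by auto.
  assert (Py : forall i, (i < m)%nat -> 0 < y i /\ 0 < y' i) by auto.
  assert (Ps : forall j, (j < n)%nat -> 0 < s j /\ 0 < s' j) by auto.
  assert (Px' : forall j, (j < n)%nat -> 0 < x' j /\ 0 < x j) by (intros j Hj; split; auto).
  assert (Pw' : forall i, (i < m)%nat -> 0 < w' i /\ 0 < w i) by (intros i Hi; split; auto).
  assert (Py' : forall i, (i < m)%nat -> 0 < y' i /\ 0 < y i) by (intros i Hi; split; auto).
  assert (Ps' : forall j, (j < n)%nat -> 0 < s' j /\ 0 < s j) by (intros j Hj; split; auto).
  pose proof (ldev_gap_ge0 _ _ _ _ _ _ Px Pw). pose proof (ldev_gap_ge0 _ _ _ _ _ _ Px' Pw').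
  pose proof (ldev_gap_ge0 _ _ _ _ _ _ Py Ps). pose proof (ldev_gap_ge0 _ _ _ _ _ _ Py' Ps').
  destruct (ldev_gap_eq0 m n x x' w w') as [E1 E2]; auto.
  { apply Rmult_le_reg_l with mu; nra. }
  destruct (ldev_gap_eq0 n m y y' s s') as [E3 E4]; auto.
  { apply Rmult_le_reg_l with mu; nra. }
Qed.

Definition cont_at (n : nat) (F : (nat -> R) -> R) (x : nat -> R) : Prop :=
  forall eps, 0 < eps -> exists d, 0 < d /\
    forall y, (forall j, (j < n)%nat -> Rabs (y j - x j) < d) -> Rabs (F y - F x) < eps.

Lemma cont_at_ext n F G x : (forall y, F y = G y) -> cont_at n F x -> cont_at n G x.
Proof.
  intros E H e He. destruct (H e He) as [d [Hd Hd']]. exists d. split; auto.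
  intros y Hy. rewrite <- !E. auto.
Qed.

Lemma cont_at_const n k x : cont_at n (fun _ => k) x.
Proof. intros e He. exists 1. split; [lra|]. intros. rewrite Rminus_diag, Rabs_R0. lra. Qed.

Lemma cont_at_proj n j x : (j < n)%nat -> cont_at n (fun y => y j) x.
Proof. intros Hj e He. exists e. split; auto. Qed.

Lemma cont_at_plus n F G x : cont_at n F x -> cont_at n G x -> cont_at n (fun y => F y + G y) x.
Proof.
  intros HF HG e He.
  destruct (HF (e / 2)) as [d1 [Hd1 H1]]; [lra|].
  destruct (HG (e / 2)) as [d2 [Hd2 H2]]; [lra|].
  exists (Rmin d1 d2). split; [apply Rmin_pos; auto|]. intros y Hy.
  pose proof (Rmin_l d1 d2). pose proof (Rmin_r d1 d2).
  assert (Rabs (F y - F x) < e / 2) by (apply H1; intros j Hj; specialize (Hy j Hj); lra).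
  assert (Rabs (G y - G x) < e / 2) by (apply H2; intros j Hj; specialize (Hy j Hj); lra).
  replace (F y + G y - (F x + G x)) with ((F y - F x) + (G y - G x)) by ring.
  pose proof (Rabs_triang (F y - F x) (G y - G x)). lra.
Qed.

Lemma cont_at_scal n k F x : cont_at n F x -> cont_at n (fun y => k * F y) x.
Proof.
  intros HF e He. pose proof (Rabs_pos k) as Hk.
  destruct (HF (e / (Rabs k + 1))) as [d [Hd H]]; [apply Rdiv_lt_0_compat; lra|].
  exists d. split; auto. intros y Hy. specialize (H y Hy).
  replace (k * F y - k * F x) with (k * (F y - F x)) by ring.
  rewrite Rabs_mult. pose proof (Rabs_pos (F y - F x)).
  apply Rmult_lt_compat_l with (r := Rabs k + 1) in H; [|lra].
  replace ((Rabs k + 1) * (e / (Rabs k + 1))) with e in H by (field; lra). nra.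
Qed.

Lemma cont_at_minus n F G x : cont_at n F x -> cont_at n G x -> cont_at n (fun y => F y - G y) x.
Proof.
  intros HF HG. apply (cont_at_ext n (fun y => F y + -1 * G y)); [intros; ring|].
  apply cont_at_plus; [exact HF | apply cont_at_scal; exact HG].
Qed.

Lemma cont_at_rsum n N (f : nat -> (nat -> R) -> R) x :
  (forall j, (j < N)%nat -> cont_at n (f j) x) -> cont_at n (fun y => rsum N (fun j => f j y)) x.
Proof.
  induction N as [|N IH]; intros H.
  - apply (cont_at_ext n (fun _ => 0)); [reflexivity | apply cont_at_const].
  - apply (cont_at_ext n (fun y => rsum N (fun j => f j y) + f N y));
      [intros; rewrite rsum_S; reflexivity|].
    apply cont_at_plus; [apply IH; intros; apply H; lia | apply H; lia].
Qed.

Lemma ln_lipschitz x y : 0 < x -> Rabs (y - x) < x / 2 ->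
  Rabs (ln y - ln x) <= 2 * Rabs (y - x) / x.
Proof.
  intros Hx Hyx.
  pose proof (Rle_abs (y - x)). pose proof (Rle_abs (x - y)). rewrite Rabs_minus_sym in H0.
  assert (Hy : x / 2 < y) by lra.
  pose proof (ln_le_sub1 (y / x) ltac:(apply Rdiv_lt_0_compat; lra)) as Lyx.
  pose proof (ln_le_sub1 (x / y) ltac:(apply Rdiv_lt_0_compat; lra)) as Lxy.
  rewrite ln_div in Lyx, Lxy by lra.
  assert (y / x - 1 <= 2 * Rabs (y - x) / x).
  { replace (y / x - 1) with ((y - x) / x) by (field; lra).
    apply Rmult_le_compat_r; [left; apply Rinv_0_lt_compat|]; lra. }
  assert (x / y - 1 <= 2 * Rabs (y - x) / x).
  { replace (x / y - 1) with ((x - y) * / y) by (field; lra).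
    replace (2 * Rabs (y - x) / x) with (Rabs (y - x) * / (x / 2)) by (field; lra).
    apply Rle_trans with (Rabs (y - x) * / y).
    - apply Rmult_le_compat_r; [left; apply Rinv_0_lt_compat|]; lra.
    - apply Rmult_le_compat_l; [apply Rabs_pos | apply Rinv_le_contravar; lra]. }
  apply Rabs_le. split; lra.
Qed.

Lemma cont_at_ln n F x : cont_at n F x -> 0 < F x -> cont_at n (fun y => ln (F y)) x.
Proof.
  intros H Hpos e He.
  destruct (H (Rmin (F x / 2) (e * F x / 2))) as [d [Hd Hd']].
  { apply Rmin_pos; [lra | apply Rdiv_lt_0_compat; [nra | lra]]. }
  exists d. split; auto. intros y Hy. specialize (Hd' y Hy).
  pose proof (Rmin_l (F x / 2) (e * F x / 2)). pose proof (Rmin_r (F x / 2) (e * F x / 2)).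
  pose proof (ln_lipschitz (F x) (F y) Hpos ltac:(lra)).
  assert (2 * Rabs (F y - F x) / F x < e).
  { apply Rmult_lt_reg_r with (F x); auto. unfold Rdiv. rewrite Rmult_assoc, Rinv_l by lra. lra. }
  lra.
Qed.

Definition coord_local (n : nat) (F : (nat -> R) -> R) : Prop :=
  forall x y, (forall j, (j < n)%nat -> x j = y j) -> F x = F y.

Definition in_region n m (lo hi : nat -> R) (G : nat -> (nat -> R) -> R) (lo' hi' : nat -> R)
    (x : nat -> R) : Prop :=
  (forall j, (j < n)%nat -> lo j <= x j <= hi j) /\
  (forall i, (i < m)%nat -> lo' i <= G i x <= hi' i).

Module RegionMin.
From mathcomp Require Import all_boot all_order all_algebra.
From mathcomp Require Import all_classical all_reals all_analysis.
From mathcomp Require Import Rstruct Rstruct_topology.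
Import Order.TTheory GRing.Theory Num.Theory.
Local Open Scope ring_scope.
Local Open Scope classical_set_scope.

Definition vecof {n} (v : 'rV[R]_n) : nat -> R :=
  fun j => if (insub j : option 'I_n) is Some k then v ord0 k else 0.

Lemma vecof_row n (f : nat -> R) j : (j < n)%N -> vecof (\row_(k < n) f k) j = f j.
Proof. by move=> jn; rewrite /vecof insubT /= mxE. Qed.

Lemma vecof_ord n (v : 'rV[R]_n) (k : 'I_n) : vecof v k = v ord0 k.
Proof. by rewrite /vecof valK. Qed.

Lemma coord_local_row n F (x : nat -> R) : coord_local n F -> F (vecof (\row_(k < n) x k)) = F x.
Proof. by move=> FL; apply: FL => j /ssrnat.ltP jn; rewrite vecof_row. Qed.

Lemma continuous_vecof n F (v : 'rV[R]_n) :
  cont_at n F (vecof v) -> {for v, continuous (fun w => F (vecof w))}.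
Proof.
move=> H; apply/(@cvgrPdist_lt R R^o _ (nbhs v) _) => e /RltP e0.
have [d [d0 Hd]] := H e e0.
apply/nbhs_ballP; exists d; first exact/RltP.
move=> w [_ Hw]; rewrite -RabsE Rabs_minus_sym; apply/RltP; apply: Hd => j jn.
rewrite /vecof; case: insubP => [k _ _|/negP[]]; last exact/ssrnat.ltP.
by move: (Hw ord0 k); rewrite /ball /= RabsE distrC => /RltP.
Qed.

Lemma in_region_row n m lo hi G lo' hi' (x : nat -> R) : (forall i, coord_local n (G i)) ->
  in_region n m lo hi G lo' hi' (vecof (\row_(k < n) x k)) <-> in_region n m lo hi G lo' hi' x.
Proof.
move=> GL.
have Ex j : (j < n)%coq_nat -> vecof (\row_(k < n) x k) j = x j.
  by move=> /ssrnat.ltP; exact: vecof_row.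
have EG i : G i (vecof (\row_(k < n) x k)) = G i x by exact: coord_local_row.
split=> -[H1 H2]; split=> [j jn|i im].
- by rewrite -Ex //; exact: H1.
- by rewrite -EG; exact: H2.
- by rewrite Ex //; exact: H1.
- by rewrite EG; exact: H2.
Qed.

Lemma compact_region n m lo hi G lo' hi' :
  (forall i x, (i < m)%coq_nat -> cont_at n (G i) x) ->
  compact [set v : 'rV[R]_n | in_region n m lo hi G lo' hi' (vecof v)].
Proof.
move=> Gc.
pose B := [set v : 'rV[R]_n | forall k : 'I_n, `[lo k, hi k]%classic (v ord0 k)].
pose C := \bigcap_(i in [set i | (i < m)%coq_nat])
            ((fun v : 'rV[R]_n => G i (vecof v)) @^-1` `[lo' i, hi' i]%classic).
have -> : [set v | in_region n m lo hi G lo' hi' (vecof v)] = B `&` C.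
  apply/seteqP; split=> v /=.
  - move=> [H1 H2]; split=> [k|i /= im]; rewrite /= in_itv /=.
      rewrite -vecof_ord; have [h1 h2] := H1 k (ssrnat.ltP (ltn_ord k)).
      by apply/andP; split; apply/RleP.
    by have [h1 h2] := H2 i im; apply/andP; split; apply/RleP.
  - move=> [H1 H2]; split=> [j /ssrnat.ltP jn|i im].
      by move: (H1 (Ordinal jn)); rewrite /= in_itv /= -vecof_ord => /andP[/RleP ? /RleP ?].
    by move: (H2 i im); rewrite /= in_itv /= => /andP[/RleP ? /RleP ?].
apply: compact_closedI.
  apply: (@rV_compact _ _ (fun k => `[lo k, hi k]%classic)) => k; exact: segment_compact.
apply: closed_bigI => i im.
apply: preimage_closed; last exact: (@interval_closed R (BLeft (lo' i)) (BRight (hi' i))).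
by move=> v _; apply: continuous_vecof; exact: Gc.
Qed.

Lemma in_region_min n m lo hi G lo' hi' (F : (nat -> R) -> R) :
  (forall i, coord_local n (G i)) -> coord_local n F ->
  (forall i x, (i < m)%coq_nat -> cont_at n (G i) x) ->
  (forall x, in_region n m lo hi G lo' hi' x -> cont_at n F x) ->
  (exists x, in_region n m lo hi G lo' hi' x) ->
  exists x, in_region n m lo hi G lo' hi' x /\
    forall y, in_region n m lo hi G lo' hi' y -> Rle (F x) (F y).
Proof.
move=> GL FL Gc Fc [x0 Sx0].
pose A := [set v : 'rV[R]_n | in_region n m lo hi G lo' hi' (vecof v)].
have A0 : A !=set0 by exists (\row_(k < n) x0 k); apply/in_region_row.
have cF : {within A, continuous (fun v => F (vecof v))}.
  apply: continuous_in_subspaceT => v; rewrite inE => Av.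
  exact: continuous_vecof (Fc _ Av).
have [c Ac cmin] := EVT_min_rV A0 (compact_region n m lo hi G lo' hi' Gc) cF.
exists (vecof c); split; first by rewrite inE in Ac.
move=> y Sy; have Sy' := proj2 (in_region_row n m lo hi G lo' hi' y GL) Sy.
by have := cmin (\row_(k < n) y k); rewrite inE (coord_local_row _ _ _ FL) => /(_ Sy') /RleP.
Qed.

End RegionMin.

(** * Existence of the central point over the reals *)

(* The minimum of [u |-> a u / 2 - mu ln u] over [u > 0], attained at [u = 2 mu / a]. *)
Definition lin_log_floor (mu a : R) : R := mu - mu * ln (2 * mu / a).

Lemma lin_log_lower mu a u : 0 < mu -> 0 < a -> 0 < u ->
  a * u / 2 + lin_log_floor mu a <= a * u - mu * ln u.
Proof.
  intros Hmu Ha Hu. unfold lin_log_floor.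
  assert (E : ln u = ln (a * u / (2 * mu)) + ln (2 * mu / a)).
  { rewrite <- ln_mult by (apply Rdiv_lt_0_compat; nra). f_equal. field. split; lra. }
  pose proof (ln_le_sub1 (a * u / (2 * mu)) ltac:(apply Rdiv_lt_0_compat; nra)) as L.
  apply Rmult_le_compat_l with (r := mu) in L; [|lra].
  replace (mu * (a * u / (2 * mu) - 1)) with (a * u / 2 - mu) in L by (field; lra).
  rewrite E. lra.
Qed.

Lemma lin_log_bounds mu a u C : 0 < mu -> 0 < a -> 0 < u -> a * u - mu * ln u <= C ->
  exp (- C / mu) < u /\ u <= 2 * (C - lin_log_floor mu a) / a.
Proof.
  intros Hmu Ha Hu H. split.
  - rewrite <- (exp_ln u) by auto. apply exp_increasing.
    apply Rmult_lt_reg_l with mu; auto.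
    replace (mu * (- C / mu)) with (- C) by (field; lra). nra.
  - pose proof (lin_log_lower mu a u Hmu Ha Hu).
    apply Rmult_le_reg_l with (a / 2); [apply Rdiv_lt_0_compat; lra|].
    replace (a / 2 * (2 * (C - lin_log_floor mu a) / a)) with (C - lin_log_floor mu a)
      by (field; lra). lra.
Qed.

Lemma common_radius m (r coef : nat -> R) : (forall i, (i < m)%nat -> 0 < r i) ->
  exists eta, 0 < eta /\ forall h, Rabs h <= eta -> forall i, (i < m)%nat -> Rabs (coef i * h) <= r i.
Proof.
  induction m as [|m IH]; intros Hr.
  - exists 1. split; [lra|]. intros. lia.
  - destruct IH as [e1 [He1 H1]]; [intros; apply Hr; lia|].
    set (e2 := r m / (Rabs (coef m) + 1)).
    assert (Hc := Rabs_pos (coef m)). assert (Hrm := Hr m (Nat.lt_succ_diag_r m)).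
    assert (He2 : 0 < e2) by (apply Rdiv_lt_0_compat; lra).
    exists (Rmin e1 e2). split; [apply Rmin_pos; auto|]. intros h Hh i Hi.
    pose proof (Rmin_l e1 e2). pose proof (Rmin_r e1 e2).
    destruct (Nat.eq_dec i m) as [->|]; [|apply H1; [lra | lia]].
    rewrite Rabs_mult. pose proof (Rabs_pos h).
    assert (e2 * (Rabs (coef m) + 1) = r m) by (unfold e2; field; lra). nra.
Qed.

Section Existence.

Variables (m n : nat) (a : nat -> nat -> R) (b c : nat -> R) (mu : R).
Hypothesis mu_gt0 : 0 < mu.

(* The primal problem is solved for [w], leaving [x] as the only variable. *)
Definition slack_of (x : nat -> R) (i : nat) : R := b i - rsum n (fun j => a i j * x j).

Definition pobj_of (x : nat -> R) : R := rprimal_obj m n c mu x (slack_of x).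

Lemma coord_local_slack_of i : coord_local n (fun x => slack_of x i).
Proof. intros x y E. unfold slack_of. f_equal. apply rsum_ext. intros j Hj. rewrite E; auto. Qed.

Lemma coord_local_pobj_of : coord_local n pobj_of.
Proof.
  intros x y E. unfold pobj_of, rprimal_obj.
  rewrite (rsum_ext n (fun j => c j * x j) (fun j => c j * y j)) by (intros j Hj; rewrite E; auto).
  rewrite (rsum_ext n (fun j => ln (x j)) (fun j => ln (y j))) by (intros j Hj; rewrite E; auto).
  rewrite (rsum_ext m (fun i => ln (slack_of x i)) (fun i => ln (slack_of y i)))
    by (intros i Hi; rewrite (coord_local_slack_of i x y E); auto).
  reflexivity.
Qed.

Lemma cont_at_slack_of i x : cont_at n (fun y => slack_of y i) x.
Proof.
  apply cont_at_minus; [apply cont_at_const|].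
  apply cont_at_rsum. intros j Hj. apply cont_at_scal, cont_at_proj. auto.
Qed.

Lemma cont_at_pobj_of x :
  (forall j, (j < n)%nat -> 0 < x j) -> (forall i, (i < m)%nat -> 0 < slack_of x i) ->
  cont_at n pobj_of x.
Proof.
  intros Hx Hw. apply cont_at_minus.
  - apply cont_at_rsum. intros j Hj. apply cont_at_scal, cont_at_proj. auto.
  - apply cont_at_scal, cont_at_plus; apply cont_at_rsum.
    + intros j Hj. apply cont_at_ln; [apply cont_at_proj |]; auto.
    + intros i Hi. apply cont_at_ln; [apply cont_at_slack_of | auto].
Qed.

(* Weak duality against a dual feasible [(y0, s0)] splits the objective into one-variable terms. *)
Lemma pobj_of_split y0 s0 x : rdual_feas m n a c y0 s0 ->
  pobj_of x =
  rsum n (fun j => s0 j * x j - mu * ln (x j)) +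
  rsum m (fun i => y0 i * slack_of x i - mu * ln (slack_of x i)) - rsum m (fun i => y0 i * b i).
Proof.
  intros [_ [_ Hd]]. unfold pobj_of, rprimal_obj. rewrite (cost_dual_slack m n a c y0 s0 x Hd).
  rewrite (rsum_ext m (fun i => y0 i * rsum n (fun j => a i j * x j))
                      (fun i => y0 i * b i - y0 i * slack_of x i)) by (intros; unfold slack_of; ring).
  rewrite !rsum_minus, !rsum_scal_l. ring.
Qed.

Definition floor_sum (y0 s0 : nat -> R) : R :=
  rsum n (fun j => lin_log_floor mu (s0 j)) + rsum m (fun i => lin_log_floor mu (y0 i))
  - rsum m (fun i => y0 i * b i).

Lemma sublevel_bounds y0 s0 x D : rdual_feas m n a c y0 s0 ->
  (forall j, (j < n)%nat -> 0 < x j) -> (forall i, (i < m)%nat -> 0 < slack_of x i) ->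
  pobj_of x <= D + floor_sum y0 s0 ->
  (forall j, (j < n)%nat ->
     exp (- (D + lin_log_floor mu (s0 j)) / mu) < x j <= 2 * D / s0 j) /\
  (forall i, (i < m)%nat ->
     exp (- (D + lin_log_floor mu (y0 i)) / mu) < slack_of x i <= 2 * D / y0 i).
Proof.
  intros Hdf Hx Hw H. rewrite (pobj_of_split y0 s0 x Hdf) in H. unfold floor_sum in H.
  destruct Hdf as [Hy0 [Hs0 _]].
  (* every term [a u - mu ln u - floor] is nonnegative, so each is bounded by the total [D] *)
  set (T := fun j => s0 j * x j - mu * ln (x j) - lin_log_floor mu (s0 j)).
  set (U := fun i => y0 i * slack_of x i - mu * ln (slack_of x i) - lin_log_floor mu (y0 i)).
  assert (HT : forall j, (j < n)%nat -> 0 <= T j).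
  { intros j Hj. pose proof (lin_log_lower mu (s0 j) (x j) mu_gt0 (Hs0 j Hj) (Hx j Hj)).
    assert (0 <= s0 j * x j) by (apply Rmult_le_pos; left; auto). unfold T. lra. }
  assert (HU : forall i, (i < m)%nat -> 0 <= U i).
  { intros i Hi. pose proof (lin_log_lower mu (y0 i) (slack_of x i) mu_gt0 (Hy0 i Hi) (Hw i Hi)).
    assert (0 <= y0 i * slack_of x i) by (apply Rmult_le_pos; left; auto). unfold U. lra. }
  assert (Hsum : rsum n T + rsum m U <= D).
  { unfold T, U. rewrite (rsum_minus n (fun j => s0 j * x j - mu * ln (x j))).
    rewrite (rsum_minus m (fun i => y0 i * slack_of x i - mu * ln (slack_of x i))). lra. }
  pose proof (rsum_nonneg n T HT). pose proof (rsum_nonneg m U HU).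
  split.
  - intros j Hj. pose proof (rsum_nonneg_term_le n T j HT Hj).
    destruct (lin_log_bounds mu (s0 j) (x j) (D + lin_log_floor mu (s0 j)) mu_gt0 (Hs0 j Hj) (Hx j Hj))
      as [L1 L2]; [unfold T in *; lra|].
    split; [exact L1 | rewrite Rplus_minus_r in L2; exact L2].
  - intros i Hi. pose proof (rsum_nonneg_term_le m U i HU Hi).
    destruct (lin_log_bounds mu (y0 i) (slack_of x i) (D + lin_log_floor mu (y0 i)) mu_gt0
                (Hy0 i Hi) (Hw i Hi))
      as [L1 L2]; [unfold U in *; lra|].
    split; [exact L1 | rewrite Rplus_minus_r in L2; exact L2].
Qed.

Definition bump (x : nat -> R) (k : nat) (h : R) : nat -> R :=
  fun j => x j + (if Nat.eqb j k then h else 0).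

Lemma slack_of_bump x k h i : (k < n)%nat -> slack_of (bump x k h) i = slack_of x i - a i k * h.
Proof.
  intros Hk. unfold slack_of, bump.
  rewrite (rsum_ext n _ (fun j => a i j * x j + (if Nat.eqb j k then a i k * h else 0))).
  2: { intros j Hj. destruct (Nat.eqb_spec j k); [subst |]; ring. }
  rewrite rsum_plus, rsum_delta by auto. ring.
Qed.

Lemma rsum_bump N (f : nat -> R -> R) x k h : (k < N)%nat ->
  rsum N (fun j => f j (bump x k h j)) = rsum N (fun j => f j (x j)) + (f k (x k + h) - f k (x k)).
Proof.
  intros Hk. unfold bump.
  rewrite (rsum_ext N _ (fun j => f j (x j) + (if Nat.eqb j k then f k (x k + h) - f k (x k) else 0))).
  2: { intros j Hj. destruct (Nat.eqb_spec j k); [subst; ring | rewrite Rplus_0_r; ring]. }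
  rewrite rsum_plus, rsum_delta by auto. ring.
Qed.

Definition pobj_slope (x : nat -> R) (k : nat) : R :=
  c k - mu / x k + mu * rsum m (fun i => a i k / slack_of x i).

Definition pobj_curv (x : nat -> R) (k : nat) : R :=
  2 * mu * (/ x k * / x k) + 2 * mu * rsum m (fun i => (a i k / slack_of x i) * (a i k / slack_of x i)).

Lemma pobj_of_bump_upper x k h : (k < n)%nat -> 0 < x k -> Rabs h <= x k / 2 ->
  (forall i, (i < m)%nat -> 0 < slack_of x i /\ Rabs (a i k * h) <= slack_of x i / 2) ->
  pobj_of (bump x k h) - pobj_of x <= h * pobj_slope x k + h * h * pobj_curv x k.
Proof.
  intros Hk Hx Hh Hw.
  assert (Lx := ln_shift_lower (x k) h Hx Hh).
  assert (Lw : rsum m (fun i => ln (slack_of x i)) - h * rsum m (fun i => a i k / slack_of x i)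
               - 2 * (h * h) * rsum m (fun i => (a i k / slack_of x i) * (a i k / slack_of x i))
               <= rsum m (fun i => ln (slack_of (bump x k h) i))).
  { rewrite <- !rsum_scal_l, <- !rsum_minus. apply rsum_le. intros i Hi.
    destruct (Hw i Hi) as [Hpos Hsmall]. rewrite slack_of_bump by auto.
    rewrite <- Rabs_Ropp in Hsmall.
    pose proof (ln_shift_lower _ _ Hpos Hsmall) as L.
    replace (slack_of x i - a i k * h) with (slack_of x i + - (a i k * h)) by ring.
    assert (- (a i k * h) / slack_of x i = - (h * (a i k / slack_of x i))) by (field; lra).
    assert (2 * (- (a i k * h) / slack_of x i) * (- (a i k * h) / slack_of x i) =
            2 * (h * h) * (a i k / slack_of x i * (a i k / slack_of x i))) by (field; lra).
    lra. }
  unfold pobj_of, rprimal_obj.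
  rewrite (rsum_bump n (fun j u => c j * u)), (rsum_bump n (fun _ u => ln u)) by auto.
  unfold pobj_slope, pobj_curv.
  assert (mu * (ln (x k) + h / x k - 2 * (h / x k) * (h / x k)) <= mu * ln (x k + h))
    by (apply Rmult_le_compat_l; lra).
  assert (mu * (rsum m (fun i => ln (slack_of x i)) - h * rsum m (fun i => a i k / slack_of x i)
               - 2 * (h * h) * rsum m (fun i => (a i k / slack_of x i) * (a i k / slack_of x i)))
          <= mu * rsum m (fun i => ln (slack_of (bump x k h) i)))
    by (apply Rmult_le_compat_l; lra).
  replace (h / x k) with (h * / x k) in * by reflexivity.
  replace (mu / x k) with (mu * / x k) by reflexivity.
  nra.
Qed.

Lemma pobj_curv_ge0 x k : 0 <= pobj_curv x k.
Proof.
  unfold pobj_curv.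
  assert (0 <= rsum m (fun i => a i k / slack_of x i * (a i k / slack_of x i)))
    by (apply rsum_nonneg; intros; apply Rle_0_sqr).
  pose proof (Rle_0_sqr (/ x k)). unfold Rsqr in *. nra.
Qed.

Lemma pobj_slope_eq0 x k : (k < n)%nat -> 0 < x k ->
  (forall i, (i < m)%nat -> 0 < slack_of x i) ->
  (exists eta, 0 < eta /\ forall h, Rabs h <= eta ->
     pobj_of x <= pobj_of (bump x k h)) ->
  pobj_slope x k = 0.
Proof.
  intros Hk Hx Hw [eta [Heta Hmin]].
  destruct (common_radius m (fun i => slack_of x i / 2) (fun i => a i k)) as [eta1 [Heta1 H1]].
  { intros i Hi. specialize (Hw i Hi). lra. }
  pose proof (Rmin_l eta (Rmin eta1 (x k / 2))). pose proof (Rmin_r eta (Rmin eta1 (x k / 2))).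
  pose proof (Rmin_l eta1 (x k / 2)). pose proof (Rmin_r eta1 (x k / 2)).
  assert (Hr : 0 < Rmin eta (Rmin eta1 (x k / 2))) by (apply Rmin_pos; [|apply Rmin_pos]; lra).
  apply (quadratic_local_min_slope _ (pobj_curv x k) _ Hr (pobj_curv_ge0 x k)).
  intros h Hh.
  pose proof (Hmin h ltac:(lra)).
  pose proof (pobj_of_bump_upper x k h Hk Hx ltac:(lra)
                (fun i Hi => conj (Hw i Hi) (H1 h ltac:(lra) i Hi))).
  lra.
Qed.

Definition strict_box (lbx ubx lbw ubw x : nat -> R) : Prop :=
  (forall j, (j < n)%nat -> lbx j < x j <= ubx j) /\
  (forall i, (i < m)%nat -> lbw i < slack_of x i <= ubw i).

(* The margin keeps small bumps of points of the strict box inside the region. *)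
Definition margin_region (lbx ubx lbw ubw : nat -> R) : (nat -> R) -> Prop :=
  in_region n m (fun j => lbx j / 2) (fun j => ubx j + 1) (fun i x => slack_of x i)
    (fun i => lbw i / 2) (fun i => ubw i + 1).

Lemma strict_box_in_margin lbx ubx lbw ubw x :
  (forall j, 0 < lbx j) -> (forall i, 0 < lbw i) ->
  strict_box lbx ubx lbw ubw x -> margin_region lbx ubx lbw ubw x.
Proof.
  intros Hlx Hlw [Hx Hw]. split.
  - intros j Hj. specialize (Hx j Hj). specialize (Hlx j). lra.
  - intros i Hi. specialize (Hw i Hi). specialize (Hlw i). lra.
Qed.

Lemma margin_min_local_min lbx ubx lbw ubw x k : (k < n)%nat ->
  (forall j, 0 < lbx j) -> (forall i, 0 < lbw i) -> strict_box lbx ubx lbw ubw x ->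
  (forall y, margin_region lbx ubx lbw ubw y -> pobj_of x <= pobj_of y) ->
  exists eta, 0 < eta /\ forall h, Rabs h <= eta ->
    pobj_of x <= pobj_of (bump x k h).
Proof.
  intros Hk Hlx Hlw [Hx Hw] Hmin.
  destruct (common_radius m (fun i => Rmin (lbw i / 2) 1) (fun i => a i k)) as [eta1 [Heta1 H1]].
  { intros i Hi. apply Rmin_pos; [specialize (Hlw i) |]; lra. }
  assert (Hlk := Hlx k).
  exists (Rmin eta1 (Rmin (lbx k / 2) 1)). split; [apply Rmin_pos; [|apply Rmin_pos]; lra|].
  intros h Hh. apply Hmin.
  pose proof (Rmin_l eta1 (Rmin (lbx k / 2) 1)). pose proof (Rmin_r eta1 (Rmin (lbx k / 2) 1)).
  pose proof (Rmin_l (lbx k / 2) 1). pose proof (Rmin_r (lbx k / 2) 1).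
  apply Rabs_le_inv in Hh as Hh'. split.
  - intros j Hj. specialize (Hx j Hj). specialize (Hlx j). unfold bump.
    destruct (Nat.eqb_spec j k); [subst|]; lra.
  - intros i Hi. rewrite slack_of_bump by auto.
    specialize (Hw i Hi). specialize (Hlw i).
    pose proof (Rabs_le_inv _ _ (H1 h ltac:(lra) i Hi)).
    pose proof (Rmin_l (lbw i / 2) 1). pose proof (Rmin_r (lbw i / 2) 1). lra.
Qed.

Lemma rcentral_of_stationary x :
  (forall j, (j < n)%nat -> 0 < x j) -> (forall i, (i < m)%nat -> 0 < slack_of x i) ->
  (forall k, (k < n)%nat -> pobj_slope x k = 0) ->
  rcentral m n a b c mu x (slack_of x)
    (fun i => mu / slack_of x i) (fun j => mu / x j).
Proof.
  intros Hx Hw Hslope. split; [|split; [|split]].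
  - split; [auto | split; [auto |]]. intros i Hi. unfold slack_of. ring.
  - split; [|split].
    + intros i Hi. apply Rdiv_lt_0_compat; auto.
    + intros j Hj. apply Rdiv_lt_0_compat; auto.
    + intros j Hj. specialize (Hslope j Hj). unfold pobj_slope in Hslope.
      rewrite (rsum_ext m _ (fun i => mu * (a i j / slack_of x i)))
        by (intros i Hi; specialize (Hw i Hi); field; lra).
      rewrite rsum_scal_l. lra.
  - intros i Hi. specialize (Hw i Hi). field. lra.
  - intros j Hj. specialize (Hx j Hj). field. lra.
Qed.

Lemma rcentral_exists x0 w0 y0 s0 : rprimal_feas m n a b x0 w0 -> rdual_feas m n a c y0 s0 ->
  exists x w y s, rcentral m n a b c mu x w y s.
Proof.
  intros Hpf Hdf.
  set (D := pobj_of x0 - floor_sum y0 s0).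
  set (lbx := fun j => exp (- (D + lin_log_floor mu (s0 j)) / mu)).
  set (ubx := fun j => 2 * D / s0 j).
  set (lbw := fun i => exp (- (D + lin_log_floor mu (y0 i)) / mu)).
  set (ubw := fun i => 2 * D / y0 i).
  assert (Hlbx : forall j, 0 < lbx j) by (intros; apply exp_pos).
  assert (Hlbw : forall i, 0 < lbw i) by (intros; apply exp_pos).
  assert (Hsub : forall x, (forall j, (j < n)%nat -> 0 < x j) ->
                   (forall i, (i < m)%nat -> 0 < slack_of x i) ->
                   pobj_of x <= pobj_of x0 -> strict_box lbx ubx lbw ubw x).
  { intros x Hx Hw H. apply (sublevel_bounds y0 s0 x D Hdf Hx Hw). unfold D. lra. }
  destruct Hpf as [Hx0 [Hw0 Hp0]].
  assert (Hbox0 : strict_box lbx ubx lbw ubw x0).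
  { apply Hsub; [auto | | lra].
    intros i Hi. unfold slack_of. rewrite <- (Hp0 i Hi). replace (_ + w0 i - _) with (w0 i) by ring. auto. }
  assert (Hpos : forall x, margin_region lbx ubx lbw ubw x ->
            (forall j, (j < n)%nat -> 0 < x j) /\ (forall i, (i < m)%nat -> 0 < slack_of x i)).
  { intros x [Hb Hc]. split.
    - intros j Hj. destruct (Hb j Hj). specialize (Hlbx j). lra.
    - intros i Hi. destruct (Hc i Hi). specialize (Hlbw i). lra. }
  destruct (RegionMin.in_region_min n m (fun j => lbx j / 2) (fun j => ubx j + 1) (fun i x => slack_of x i)
              (fun i => lbw i / 2) (fun i => ubw i + 1) pobj_of) as [xs [Rxs Hmin]].
  - intros i. apply coord_local_slack_of.
  - apply coord_local_pobj_of.
  - intros i x _. apply cont_at_slack_of.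
  - intros x Rx. destruct (Hpos x Rx). apply cont_at_pobj_of; auto.
  - exists x0. apply strict_box_in_margin; auto.
  - destruct (Hpos xs Rxs) as [Hxs Hws].
    assert (Hbox : strict_box lbx ubx lbw ubw xs).
    { apply Hsub; auto. apply Hmin, strict_box_in_margin; auto. }
    do 4 eexists. apply rcentral_of_stationary; [exact Hxs | exact Hws |].
    intros k Hk. apply pobj_slope_eq0; auto.
    apply (margin_min_local_min lbx ubx lbw ubw); auto.
Qed.

End Existence.

(** * Definable sets of valuations *)

Definition definable (P : (nat -> R) -> Prop) : Prop :=
  exists phi, forall e, sat e phi <-> P e.

Lemma definable_iff P Q : definable P -> (forall e, P e <-> Q e) -> definable Q.
Proof. intros [p Hp] H. exists p. intros e. rewrite Hp. apply H. Qed.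

Lemma definable_and P Q : definable P -> definable Q -> definable (fun e => P e /\ Q e).
Proof. intros [p Hp] [q Hq]. exists (FAnd p q). intros e. simpl. rewrite Hp, Hq. tauto. Qed.

Lemma definable_not P : definable P -> definable (fun e => ~ P e).
Proof. intros [p Hp]. exists (FNot p). intros e. simpl. rewrite Hp. tauto. Qed.

Lemma definable_or P Q : definable P -> definable Q -> definable (fun e => P e \/ Q e).
Proof.
  intros HP HQ. apply (definable_iff (fun e => ~ (~ P e /\ ~ Q e))).
  - apply definable_not, definable_and; apply definable_not; auto.
  - intros e. split; [intros H; apply NNPP; tauto | tauto].
Qed.

Lemma definable_ex k P : definable P -> definable (fun e => exists r, P (upd e k r)).
Proof.
  intros [p Hp]. exists (FEx k p). intros e. simpl.
  split; intros [r Hr]; exists r; apply Hp; auto.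
Qed.

Lemma definable_eq u v : definable (fun e => teval e u = teval e v).
Proof. exists (FEq u v). reflexivity. Qed.

Lemma definable_lt u v : definable (fun e => teval e u < teval e v).
Proof. exists (FLt u v). reflexivity. Qed.

Lemma definable_forall_lt N (P : nat -> (nat -> R) -> Prop) :
  (forall i, (i < N)%nat -> definable (P i)) -> definable (fun e => forall i, (i < N)%nat -> P i e).
Proof.
  induction N as [|N IH]; intros H.
  - apply (definable_iff (fun e => teval e (TCst 0) = teval e (TCst 0))); [apply definable_eq|].
    intros e. split; [intros _ i Hi; lia | reflexivity].
  - apply (definable_iff (fun e => (forall i, (i < N)%nat -> P i e) /\ P N e)).
    + apply definable_and; [apply IH; intros; apply H | apply H]; lia.
    + intros e. split.
      * intros [Hlt HN] i Hi. destruct (Nat.eq_dec i N) as [->|]; [auto | apply Hlt; lia].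
      * intros Hall. split; [intros; apply Hall | apply Hall]; lia.
Qed.

Fixpoint term_rename (r : nat -> nat) (u : term) : term :=
  match u with
  | TVar k => TVar (r k)
  | TCst c => TCst c
  | TAdd u1 u2 => TAdd (term_rename r u1) (term_rename r u2)
  | TMul u1 u2 => TMul (term_rename r u1) (term_rename r u2)
  | TOpp u1 => TOpp (term_rename r u1)
  | TPow c u1 => TPow c (term_rename r u1)
  end.

Fixpoint formula_rename (r : nat -> nat) (p : formula) : formula :=
  match p with
  | FEq u v => FEq (term_rename r u) (term_rename r v)
  | FLt u v => FLt (term_rename r u) (term_rename r v)
  | FNot q => FNot (formula_rename r q)
  | FAnd q1 q2 => FAnd (formula_rename r q1) (formula_rename r q2)
  | FEx k q => FEx (r k) (formula_rename r q)
  end.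

Lemma teval_rename r e u : teval e (term_rename r u) = teval (fun k => e (r k)) u.
Proof. induction u; simpl; congruence. Qed.

Lemma upd_rename r e k v : (forall k1 k2, r k1 = r k2 -> k1 = k2) ->
  (fun l => upd e (r k) v (r l)) = upd (fun l => e (r l)) k v.
Proof.
  intros Hinj. apply functional_extensionality. intros l. unfold upd.
  destruct (Nat.eqb_spec (r l) (r k)) as [E|], (Nat.eqb_spec l k); subst; try congruence.
  apply Hinj in E. contradiction.
Qed.

Lemma sat_rename r p : (forall k1 k2, r k1 = r k2 -> k1 = k2) ->
  forall e, sat e (formula_rename r p) <-> sat (fun k => e (r k)) p.
Proof.
  intros Hinj. induction p; intros e; simpl; rewrite ?teval_rename; try tauto.
  - rewrite IHp. tauto.
  - rewrite IHp1, IHp2. tauto.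
  - split; intros [v Hv]; exists v; [rewrite IHp, upd_rename in Hv | rewrite IHp, upd_rename]; auto.
Qed.

Lemma definable_graph f k l : definable_fun f -> k <> l -> definable (fun e => e l = f (e k)).
Proof.
  intros [p Hp] Hkl.
  (* move the graph variables [0, 1] of [p] to [k, l], and every other variable out of the way *)
  set (r := fun v => if Nat.eqb v 0 then k else if Nat.eqb v 1 then l else (v + k + l + 2)%nat).
  assert (Hinj : forall v1 v2, r v1 = r v2 -> v1 = v2).
  { intros v1 v2. unfold r.
    destruct (Nat.eqb_spec v1 0), (Nat.eqb_spec v2 0), (Nat.eqb_spec v1 1), (Nat.eqb_spec v2 1); lia. }
  exists (formula_rename r p). intros e. rewrite (sat_rename r p Hinj e), Hp. reflexivity.
Qed.

Definition upd_list (e : nat -> R) (L : list nat) (g : nat -> R) : nat -> R :=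
  fun k => if in_dec Nat.eq_dec k L then g k else e k.

Lemma upd_list_in e L g k : In k L -> upd_list e L g k = g k.
Proof. intros H. unfold upd_list. destruct (in_dec Nat.eq_dec k L); tauto. Qed.

Lemma upd_list_notin e L g k : ~ In k L -> upd_list e L g k = e k.
Proof. intros H. unfold upd_list. destruct (in_dec Nat.eq_dec k L); tauto. Qed.

Lemma upd_list_cons e k L g :
  upd_list e (k :: L) g = upd_list (upd e k (g k)) L g.
Proof.
  apply functional_extensionality. intros v. unfold upd_list, upd.
  destruct (in_dec Nat.eq_dec v (k :: L)) as [Hin|Hnin], (in_dec Nat.eq_dec v L);
    auto; try (exfalso; apply Hnin; right; assumption).
  - destruct (Nat.eqb_spec v k); [subst; reflexivity|].
    destruct Hin; [congruence | contradiction].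
  - destruct (Nat.eqb_spec v k); [subst; exfalso; apply Hnin; left; reflexivity | reflexivity].
Qed.

Lemma definable_ex_list L P : definable P -> definable (fun e => exists g, P (upd_list e L g)).
Proof.
  intros HP. induction L as [|k L IH].
  - apply (definable_iff P); [exact HP|]. intros e. unfold upd_list. simpl.
    split; [intros; exists (fun _ => 0); auto | intros [_ H]; exact H].
  - apply (definable_iff (fun e => exists v, (fun e' => exists g, P (upd_list e' L g)) (upd e k v))).
    + exact (definable_ex k _ IH).
    + intros e. split.
      * intros [v [g Hg]]. exists (fun u => if in_dec Nat.eq_dec u L then g u else v).
        rewrite upd_list_cons.
        replace (upd_list (upd e k _) L _) with (upd_list (upd e k v) L g); [exact Hg|].
        apply functional_extensionality. intros u. unfold upd_list, upd.
        destruct (in_dec Nat.eq_dec u L), (Nat.eqb_spec u k), (in_dec Nat.eq_dec k L);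
          subst; auto; contradiction.
      * intros [g Hg]. exists (g k), g. rewrite <- upd_list_cons. exact Hg.
Qed.

Definition term_sum N (f : nat -> term) : term := fold_right TAdd (TCst 0) (map f (seq 0 N)).

Lemma teval_term_sum e N f : teval e (term_sum N f) = rsum N (fun j => teval e (f j)).
Proof. unfold term_sum, rsum. induction (seq 0 N); simpl; congruence. Qed.

Lemma definable_rcentral m n (va : nat -> nat -> nat) (vb vc : nat -> nat) (vmu : nat)
    (vx vw vy vs : nat -> nat) :
  definable (fun e => rcentral m n (fun i j => e (va i j)) (fun i => e (vb i)) (fun j => e (vc j)) (e vmu)
                        (fun j => e (vx j)) (fun i => e (vw i)) (fun i => e (vy i)) (fun j => e (vs j))).
Proof.
  unfold rcentral, rprimal_feas, rdual_feas.
  repeat apply definable_and; apply definable_forall_lt.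
  - intros j Hj. apply (definable_lt (TCst 0) (TVar (vx j))).
  - intros i Hi. apply (definable_lt (TCst 0) (TVar (vw i))).
  - intros i Hi.
    apply (definable_iff _ _
      (definable_eq (TAdd (term_sum n (fun j => TMul (TVar (va i j)) (TVar (vx j)))) (TVar (vw i)))
                    (TVar (vb i)))).
    intros e. simpl. rewrite teval_term_sum. reflexivity.
  - intros i Hi. apply (definable_lt (TCst 0) (TVar (vy i))).
  - intros j Hj. apply (definable_lt (TCst 0) (TVar (vs j))).
  - intros j Hj.
    apply (definable_iff _ _
      (definable_eq (TAdd (TOpp (term_sum m (fun i => TMul (TVar (va i j)) (TVar (vy i))))) (TVar (vs j)))
                    (TVar (vc j)))).
    intros e. simpl. rewrite teval_term_sum. reflexivity.
  - intros i Hi. apply (definable_eq (TMul (TVar (vw i)) (TVar (vy i))) (TVar vmu)).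
  - intros j Hj. apply (definable_eq (TMul (TVar (vx j)) (TVar (vs j))) (TVar vmu)).
Qed.

Lemma rcentral_ext m n a a' b b' c c' mu x x' w w' y y' s s' :
  (forall i j, (i < m)%nat -> (j < n)%nat -> a i j = a' i j) ->
  (forall i, (i < m)%nat -> b i = b' i) -> (forall j, (j < n)%nat -> c j = c' j) ->
  (forall j, (j < n)%nat -> x j = x' j) -> (forall i, (i < m)%nat -> w i = w' i) ->
  (forall i, (i < m)%nat -> y i = y' i) -> (forall j, (j < n)%nat -> s j = s' j) ->
  rcentral m n a b c mu x w y s -> rcentral m n a' b' c' mu x' w' y' s'.
Proof.
  intros Ea Eb Ec Ex Ew Ey Es [[Hx [Hw Hp]] [[Hy [Hs Hd]] [Hwy Hxs]]].
  split; [|split; [|split]].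
  - split; [intros j Hj; rewrite <- Ex | split; [intros i Hi; rewrite <- Ew|]]; auto.
    intros i Hi. rewrite <- Eb, <- Ew, <- (Hp i Hi) by auto. f_equal.
    apply rsum_ext. intros j Hj. rewrite Ea, Ex by auto. reflexivity.
  - split; [intros i Hi; rewrite <- Ey | split; [intros j Hj; rewrite <- Es|]]; auto.
    intros j Hj. rewrite <- Ec, <- Es, <- (Hd j Hj) by auto. do 2 f_equal.
    apply rsum_ext. intros i Hi. rewrite Ea, Ey by auto. reflexivity.
  - intros i Hi. rewrite <- Ew, <- Ey by auto. auto.
  - intros j Hj. rewrite <- Ex, <- Es by auto. auto.
Qed.

(** * The central path as a definable family *)

(* Variable [0] carries [t] and variable [1] the value of a component; the remaining
   variables, from [2] on, hold the central point followed by the data [b, c, mu, A] at [t]. *)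
Section Layout.

Variables (n m : nat).

Definition var_x j : nat := 2 + j.
Definition var_w i : nat := 2 + n + i.
Definition var_y i : nat := 2 + n + m + i.
Definition var_s j : nat := 2 + n + 2 * m + j.
Definition var_b i : nat := 2 + 2 * n + 2 * m + i.
Definition var_c j : nat := 2 + 2 * n + 3 * m + j.
Definition var_mu : nat := 2 + 3 * n + 3 * m.
Definition var_a i j : nat := 3 + 3 * n + 3 * m + i * n + j.

Definition layout_vars : list nat := seq 2 (1 + 3 * n + 3 * m + m * n).

Definition layout_val (x w y s bv cv : nat -> R) (muv : R) (av : nat -> nat -> R) (k : nat) : R :=
  if Nat.ltb k (2 + n) then x (k - 2)%nat
  else if Nat.ltb k (2 + n + m) then w (k - (2 + n))%nat
  else if Nat.ltb k (2 + n + 2 * m) then y (k - (2 + n + m))%nat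
  else if Nat.ltb k (2 + 2 * n + 2 * m) then s (k - (2 + n + 2 * m))%nat
  else if Nat.ltb k (2 + 2 * n + 3 * m) then bv (k - (2 + 2 * n + 2 * m))%nat
  else if Nat.ltb k (2 + 3 * n + 3 * m) then cv (k - (2 + 2 * n + 3 * m))%nat
  else if Nat.eqb k (2 + 3 * n + 3 * m) then muv
  else av ((k - (3 + 3 * n + 3 * m)) / n)%nat ((k - (3 + 3 * n + 3 * m)) mod n)%nat.

Variables (e : nat -> R) (x w y s bv cv : nat -> R) (muv : R) (av : nat -> nat -> R).

Let placed := upd_list e layout_vars (layout_val x w y s bv cv muv av).

Ltac read_layout :=
  unfold placed, var_x, var_w, var_y, var_s, var_b, var_c, var_mu, var_a;
  rewrite upd_list_in by (apply in_seq; nia); unfold layout_val;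
  repeat match goal with
  | |- context [Nat.ltb ?p ?q] => destruct (Nat.ltb_spec p q); try nia
  | |- context [Nat.eqb ?p ?q] => destruct (Nat.eqb_spec p q); try nia
  end; first [reflexivity | f_equal; lia | idtac].

Lemma placed_x j : (j < n)%nat -> placed (var_x j) = x j.
Proof. intros. read_layout. Qed.
Lemma placed_w i : (i < m)%nat -> placed (var_w i) = w i.
Proof. intros. read_layout. Qed.
Lemma placed_y i : (i < m)%nat -> placed (var_y i) = y i.
Proof. intros. read_layout. Qed.
Lemma placed_s j : (j < n)%nat -> placed (var_s j) = s j.
Proof. intros. read_layout. Qed.
Lemma placed_b i : (i < m)%nat -> placed (var_b i) = bv i.
Proof. intros. read_layout. Qed.
Lemma placed_c j : (j < n)%nat -> placed (var_c j) = cv j.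
Proof. intros. read_layout. Qed.
Lemma placed_mu : placed var_mu = muv.
Proof. read_layout. Qed.
Lemma placed_a i j : (i < m)%nat -> (j < n)%nat -> placed (var_a i j) = av i j.
Proof.
  intros Hi Hj. read_layout.
  replace (3 + 3 * n + 3 * m + i * n + j - (3 + 3 * n + 3 * m))%nat with (j + i * n)%nat by lia.
  rewrite Nat.div_add, Nat.div_small, Nat.Div0.mod_add, Nat.mod_small by lia. reflexivity.
Qed.

End Layout.

Inductive block := Bx | Bw | By | Bs.

Definition block_len n m (bl : block) : nat := match bl with Bx | Bs => n | Bw | By => m end.

Definition block_var n m (bl : block) : nat -> nat :=
  match bl with Bx => var_x | Bw => var_w n | By => var_y n m | Bs => var_s n m end.

Definition block_val (bl : block) (x w y s : nat -> R) : nat -> R :=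
  match bl with Bx => x | Bw => w | By => y | Bs => s end.

Definition central_vars m n (A : mat) (b c : vec) (mu : R -> R) (o : nat) (e : nat -> R) : Prop :=
  (forall i, (i < m)%nat -> forall j, (j < n)%nat -> e (var_a n m i j) = A i j (e 0%nat)) /\
  (forall i, (i < m)%nat -> e (var_b n m i) = b i (e 0%nat)) /\
  (forall j, (j < n)%nat -> e (var_c n m j) = c j (e 0%nat)) /\
  e (var_mu n m) = mu (e 0%nat) /\
  rcentral m n (fun i j => e (var_a n m i j)) (fun i => e (var_b n m i)) (fun j => e (var_c n m j))
    (e (var_mu n m)) (fun j => e (var_x j)) (fun i => e (var_w n i)) (fun i => e (var_y n m i))
    (fun j => e (var_s n m j)) /\
  e 1%nat = e o.

Lemma definable_central_vars m n A b c mu o : Kmat m n A -> Kvec m b -> Kvec n c -> inK mu ->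
  definable (central_vars m n A b c mu o).
Proof.
  intros HA Hb Hc Hmu. unfold central_vars.
  apply definable_and; [|apply definable_and; [|apply definable_and;
    [|apply definable_and; [|apply definable_and]]]].
  - apply definable_forall_lt. intros i Hi. apply definable_forall_lt. intros j Hj.
    apply definable_graph; [apply HA; auto | unfold var_a; lia].
  - apply definable_forall_lt. intros i Hi.
    apply definable_graph; [apply Hb; auto | unfold var_b; lia].
  - apply definable_forall_lt. intros j Hj.
    apply definable_graph; [apply Hc; auto | unfold var_c; lia].
  - apply definable_graph; [auto | unfold var_mu; lia].
  - apply definable_rcentral.
  - apply (definable_eq (TVar 1) (TVar o)).
Qed.

Lemma central_vars_iff m n A b c mu bl p e : (p < block_len n m bl)%nat ->
  (exists g, central_vars m n A b c mu (block_var n m bl p) (upd_list e (layout_vars n m) g)) <->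
  exists x w y s, rcentral m n (fun i j => A i j (e 0%nat)) (fun i => b i (e 0%nat))
                    (fun j => c j (e 0%nat)) (mu (e 0%nat)) x w y s /\
                  e 1%nat = block_val bl x w y s p.
Proof.
  intros Hp.
  assert (Hout : forall g k, (k < 2)%nat -> upd_list e (layout_vars n m) g k = e k).
  { intros g k Hk. apply upd_list_notin. unfold layout_vars. rewrite in_seq. lia. }
  split.
  - intros [g [HA [Hb [Hc [Hmu [Hr Ho]]]]]].
    rewrite (Hout g 0%nat) in HA, Hb, Hc, Hmu by lia. rewrite (Hout g 1%nat) in Ho by lia.
    rewrite Hmu in Hr.
    set (e' := upd_list e (layout_vars n m) g) in *.
    exists (fun j => e' (var_x j)), (fun i => e' (var_w n i)), (fun i => e' (var_y n m i)),
      (fun j => e' (var_s n m j)).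
    split; [eapply rcentral_ext; [| | | | | | | exact Hr]; simpl; auto|].
    rewrite Ho. destruct bl; reflexivity.
  - intros [x [w [y [s [Hr Ho]]]]].
    exists (layout_val n m x w y s (fun i => b i (e 0%nat)) (fun j => c j (e 0%nat)) (mu (e 0%nat))
              (fun i j => A i j (e 0%nat))).
    unfold central_vars. rewrite (Hout _ 0%nat), (Hout _ 1%nat) by lia.
    rewrite placed_mu. split; [|split; [|split; [|split; [|split]]]].
    + intros i Hi j Hj. apply placed_a; auto.
    + intros i Hi. apply placed_b; auto.
    + intros j Hj. apply placed_c; auto.
    + reflexivity.
    + eapply rcentral_ext; [| | | | | | | exact Hr]; intros; symmetry;
        first [apply placed_a | apply placed_b | apply placed_c | apply placed_x | apply placed_w
              | apply placed_y | apply placed_s]; auto.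
    + rewrite Ho. destruct bl; simpl in Hp |- *;
        symmetry; first [apply placed_x | apply placed_w | apply placed_y | apply placed_s]; auto.
Qed.

(** * From the reals to the field [K] *)

Definition rcentral_at m n (A : mat) (b c : vec) (mu : R -> R) (t : R) (x w y s : nat -> R) : Prop :=
  rcentral m n (fun i j => A i j t) (fun i => b i t) (fun j => c j t) (mu t) x w y s.

Lemma primal_feasible_eventually m n A b x w : primal_feasible m n A b x w ->
  eventually (fun t => rprimal_feas m n (fun i j => A i j t) (fun i => b i t)
                         (fun j => x j t) (fun i => w i t)).
Proof.
  intros [_ [_ [Px [Pw Ep]]]].
  apply (eventually_mono (fun t => ((forall j, (j < n)%nat -> 0 < x j t) /\
      (forall i, (i < m)%nat -> 0 < w i t)) /\
      (forall i, (i < m)%nat -> rsum n (fun j => A i j t * x j t) + w i t = b i t)));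
    [unfold rprimal_feas; tauto|].
  repeat apply eventually_and; apply eventually_forall_lt; auto.
Qed.

Lemma dual_feasible_eventually m n A c y s : dual_feasible m n A c y s ->
  eventually (fun t => rdual_feas m n (fun i j => A i j t) (fun j => c j t)
                         (fun i => y i t) (fun j => s j t)).
Proof.
  intros [_ [_ [Ps [Py Ed]]]].
  apply (eventually_mono (fun t => ((forall i, (i < m)%nat -> 0 < y i t) /\
      (forall j, (j < n)%nat -> 0 < s j t)) /\
      (forall j, (j < n)%nat -> - rsum m (fun i => A i j t * y i t) + s j t = c j t)));
    [unfold rdual_feas; tauto|].
  repeat apply eventually_and; apply eventually_forall_lt; auto.
Qed.

Lemma central_path_eventually m n A b c mu x w y s : central_path m n A b c mu x w y s ->
  eventually (fun t => rcentral_at m n A b c mu t (fun j => x j t) (fun i => w i t)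
                         (fun i => y i t) (fun j => s j t)).
Proof.
  intros [Kx [Kw [Ky [Ks [Px [Pw [Py [Ps [Ep [Ed [Ewy Exs]]]]]]]]]]].
  pose proof (primal_feasible_eventually m n A b x w (conj Kx (conj Kw (conj Px (conj Pw Ep))))).
  pose proof (dual_feasible_eventually m n A c y s (conj Ky (conj Ks (conj Ps (conj Py Ed))))).
  apply (eventually_mono (fun t => (rprimal_feas m n (fun i j => A i j t) (fun i => b i t)
      (fun j => x j t) (fun i => w i t) /\
      rdual_feas m n (fun i j => A i j t) (fun j => c j t) (fun i => y i t) (fun j => s j t)) /\
      (forall i, (i < m)%nat -> w i t * y i t = mu t) /\
      (forall j, (j < n)%nat -> x j t * s j t = mu t))); [unfold rcentral_at, rcentral; tauto|].
  repeat apply eventually_and; try apply eventually_forall_lt; auto.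
Qed.

(* A central point at each large [t], chosen once and for all; by uniqueness any other choice agrees. *)
Definition central_choice m n A b c mu (t : R) : block -> nat -> R :=
  epsilon (inhabits (fun _ _ => 0))
    (fun q => rcentral_at m n A b c mu t (q Bx) (q Bw) (q By) (q Bs)).

Lemma central_choice_spec m n A b c mu t : (exists x w y s, rcentral_at m n A b c mu t x w y s) ->
  let q := central_choice m n A b c mu t in rcentral_at m n A b c mu t (q Bx) (q Bw) (q By) (q Bs).
Proof.
  intros [x [w [y [s H]]]].
  apply (epsilon_spec _ (fun q => rcentral_at m n A b c mu t (q Bx) (q Bw) (q By) (q Bs))).
  exists (fun bl => block_val bl x w y s). exact H.
Qed.

Definition central_comp m n A b c mu (T : R) (bl : block) : vec :=
  fun p t => if Rlt_dec T t then central_choice m n A b c mu t bl p else 0.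

Lemma block_val_unique m n a b c mu x w y s x' w' y' s' bl p : 0 < mu -> (p < block_len n m bl)%nat ->
  rcentral m n a b c mu x w y s -> rcentral m n a b c mu x' w' y' s' ->
  block_val bl x' w' y' s' p = block_val bl x w y s p.
Proof.
  intros Hmu Hp H H'. destruct (rcentral_unique _ _ _ _ _ _ _ _ _ _ _ _ _ _ Hmu H H') as [E1 [E2 [E3 E4]]].
  destruct bl; simpl in *; auto.
Qed.

Lemma definable_central_comp m n A b c mu T bl p : Kmat m n A -> Kvec m b -> Kvec n c -> inK mu ->
  (p < block_len n m bl)%nat ->
  (forall t, T < t -> 0 < mu t /\ exists x w y s, rcentral_at m n A b c mu t x w y s) ->
  definable_fun (central_comp m n A b c mu T bl p).
Proof.
  intros HA Hb Hc Hmu Hp Hex.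
  destruct (definable_or
              (fun e => T < e 0%nat /\
                 exists g, central_vars m n A b c mu (block_var n m bl p) (upd_list e (layout_vars n m) g))
              (fun e => ~ T < e 0%nat /\ e 1%nat = 0)) as [phi Hphi].
  { apply definable_and; [apply (definable_lt (TCst T) (TVar 0)) |].
    apply definable_ex_list, definable_central_vars; auto. }
  { apply definable_and; [apply definable_not, (definable_lt (TCst T) (TVar 0)) |].
    apply (definable_eq (TVar 1) (TCst 0)). }
  exists phi. intros e. rewrite Hphi. unfold central_comp.
  destruct (Rlt_dec T (e 0%nat)) as [Ht|Ht]; [|tauto].
  destruct (Hex _ Ht) as [Hmu0 Hex0].
  pose proof (central_choice_spec m n A b c mu (e 0%nat) Hex0) as Hq. simpl in Hq.
  rewrite (central_vars_iff m n A b c mu bl p e Hp). split.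
  - intros [[_ [x [w [y [s [Hr Ho]]]]]] | [Hn _]]; [|contradiction].
    rewrite Ho, (block_val_unique _ _ _ _ _ _ _ _ _ _ _ _ _ _ bl p Hmu0 Hp Hq Hr).
    destruct bl; reflexivity.
  - intros Ho. left. split; [exact Ht|].
    do 4 eexists. split; [exact Hq|]. rewrite Ho. destruct bl; reflexivity.
Qed.

Lemma central_path_exists m n A b c mu : Kmat m n A -> Kvec m b -> Kvec n c ->
  assumptionA m n A b c -> inK mu -> Kpos mu ->
  exists x w y s : vec, central_path m n A b c mu x w y s.
Proof.
  intros HA Hb Hc [x0 [w0 [y0 [s0 [Kx0 [Kw0 [Ky0 [Ks0 [Px0 [Pw0 [Py0 [Ps0 [Ep0 Ed0]]]]]]]]]]]]] Hmu Hmu0.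
  destruct (eventually_and _ _ (eventually_and _ _
    (primal_feasible_eventually m n A b x0 w0 (conj Kx0 (conj Kw0 (conj Px0 (conj Pw0 Ep0)))))
    (dual_feasible_eventually m n A c y0 s0 (conj Ky0 (conj Ks0 (conj Ps0 (conj Py0 Ed0))))))
    Hmu0) as [T HT].
  assert (Hex : forall t, T < t -> 0 < mu t /\ exists x w y s, rcentral_at m n A b c mu t x w y s).
  { intros t Ht. destruct (HT t Ht) as [[Hp Hd] Hmut]. split; [exact Hmut|].
    exact (rcentral_exists _ _ _ _ _ _ Hmut _ _ _ _ Hp Hd). }
  set (comp := central_comp m n A b c mu T).
  assert (Hcp : eventually (fun t => rcentral_at m n A b c mu t
                  (fun j => comp Bx j t) (fun i => comp Bw i t)
                  (fun i => comp By i t) (fun j => comp Bs j t))).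
  { exists T. intros t Ht. unfold comp, central_comp. destruct (Rlt_dec T t) as [_|]; [|contradiction].
    apply central_choice_spec, Hex, Ht. }
  exists (comp Bx), (comp Bw), (comp By), (comp Bs).
  repeat split; try (intros k Hk; apply definable_central_comp; auto; fail);
    intros k Hk; eapply eventually_mono; try exact Hcp; intros t Hr;
    destruct Hr as [[? [? ?]] [[? [? ?]] [? ?]]]; auto.
Qed.

Lemma primal_gap_eventually m n A b c mu x w y s x' w' : Kpos mu ->
  central_path m n A b c mu x w y s -> primal_feasible m n A b x' w' ->
  eventually (fun t =>
    let G := ldev_gap m n (fun j => x j t) (fun j => x' j t) (fun i => w i t) (fun i => w' i t) in
    0 < mu t /\ primal_obj m n c mu x' w' t - primal_obj m n c mu x w t = mu t * G /\ 0 <= G /\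
    (G <= 0 -> (forall j, (j < n)%nat -> x' j t = x j t) /\ (forall i, (i < m)%nat -> w' i t = w i t))).
Proof.
  intros Hmu Hcp PF'.
  eapply eventually_mono; [|exact (eventually_and _ _ (eventually_and _ _
    (central_path_eventually _ _ _ _ _ _ _ _ _ _ Hcp) (primal_feasible_eventually _ _ _ _ _ _ PF')) Hmu)].
  intros t [[Hc Hp] Hmut]. simpl.
  pose proof (rprimal_obj_gap _ _ _ _ _ _ _ _ _ _ _ _ Hc Hp) as Gap.
  destruct Hc as [[Hx [Hw _]] _], Hp as [Hx' [Hw' _]].
  assert (Px : forall j, (j < n)%nat -> 0 < x j t /\ 0 < x' j t) by auto.
  assert (Pw : forall i, (i < m)%nat -> 0 < w i t /\ 0 < w' i t) by auto.
  split; [exact Hmut | split; [exact Gap | split]].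
  - apply ldev_gap_ge0; auto.
  - exact (ldev_gap_eq0 _ _ _ _ _ _ Px Pw).
Qed.

Lemma dual_gap_eventually m n A b c mu x w y s y' s' : Kpos mu ->
  central_path m n A b c mu x w y s -> dual_feasible m n A c y' s' ->
  eventually (fun t =>
    let G := ldev_gap n m (fun i => y i t) (fun i => y' i t) (fun j => s j t) (fun j => s' j t) in
    0 < mu t /\ dual_obj m n b mu y s t - dual_obj m n b mu y' s' t = mu t * G /\ 0 <= G /\
    (G <= 0 -> (forall i, (i < m)%nat -> y' i t = y i t) /\ (forall j, (j < n)%nat -> s' j t = s j t))).
Proof.
  intros Hmu Hcp DF'.
  eapply eventually_mono; [|exact (eventually_and _ _ (eventually_and _ _
    (central_path_eventually _ _ _ _ _ _ _ _ _ _ Hcp) (dual_feasible_eventually _ _ _ _ _ _ DF')) Hmu)].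
  intros t [[Hc Hd] Hmut]. simpl.
  pose proof (rdual_obj_gap _ _ _ _ _ _ _ _ _ _ _ _ Hc Hd) as Gap.
  destruct Hc as [_ [[Hy [Hs _]] _]], Hd as [Hy' [Hs' _]].
  assert (Py : forall i, (i < m)%nat -> 0 < y i t /\ 0 < y' i t) by auto.
  assert (Ps : forall j, (j < n)%nat -> 0 < s j t /\ 0 < s' j t) by auto.
  split; [exact Hmut | split; [exact Gap | split]].
  - apply ldev_gap_ge0; auto.
  - exact (ldev_gap_eq0 _ _ _ _ _ _ Py Ps).
Qed.

Lemma central_path_primal_unique_optimal m n A b c mu x w y s : Kpos mu ->
  central_path m n A b c mu x w y s -> primal_unique_optimal m n A b c mu x w.
Proof.
  intros Hmu Hcp.
  assert (PF : primal_feasible m n A b x w).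
  { destruct Hcp as [Kx [Kw [_ [_ [Px [Pw [_ [_ [Ep _]]]]]]]]]. repeat split; auto. }
  split; [split; [exact PF|] |].
  - intros x' w' PF'.
    eapply eventually_mono; [|exact (primal_gap_eventually _ _ _ _ _ _ _ _ _ _ _ _ Hmu Hcp PF')].
    intros t (Hmut & Gap & HG & _). nra.
  - intros x' w' [PF' Hopt'].
    assert (E : eventually (fun t => (forall j, (j < n)%nat -> x' j t = x j t) /\
                                     (forall i, (i < m)%nat -> w' i t = w i t))).
    { eapply eventually_mono; [|exact (eventually_and _ _
        (primal_gap_eventually _ _ _ _ _ _ _ _ _ _ _ _ Hmu Hcp PF') (Hopt' x w PF))].
      intros t [(Hmut & Gap & HG & Heq) Hle]. apply Heq.
      apply Rmult_le_reg_l with (mu t); lra. }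
    split; intros k Hk; eapply eventually_mono; try exact E; intros t [Ex Ew]; auto.
Qed.

Lemma central_path_dual_unique_optimal m n A b c mu x w y s : Kpos mu ->
  central_path m n A b c mu x w y s -> dual_unique_optimal m n A b c mu y s.
Proof.
  intros Hmu Hcp.
  assert (DF : dual_feasible m n A c y s).
  { destruct Hcp as [_ [_ [Ky [Ks [_ [_ [Py [Ps [_ [Ed _]]]]]]]]]]. repeat split; auto. }
  split; [split; [exact DF|] |].
  - intros y' s' DF'.
    eapply eventually_mono; [|exact (dual_gap_eventually _ _ _ _ _ _ _ _ _ _ _ _ Hmu Hcp DF')].
    intros t (Hmut & Gap & HG & _). nra.
  - intros y' s' [DF' Hopt'].
    assert (E : eventually (fun t => (forall i, (i < m)%nat -> y' i t = y i t) /\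
                                     (forall j, (j < n)%nat -> s' j t = s j t))).
    { eapply eventually_mono; [|exact (eventually_and _ _
        (dual_gap_eventually _ _ _ _ _ _ _ _ _ _ _ _ Hmu Hcp DF') (Hopt' y s DF))].
      intros t [(Hmut & Gap & HG & Heq) Hle]. apply Heq.
      apply Rmult_le_reg_l with (mu t); lra. }
    split; intros k Hk; eapply eventually_mono; try exact E; intros t [Ey Es]; auto.
Qed.

Theorem mainTheorem4 (m n : nat) (A : mat) (b c : vec) (mu : R -> R) :
  Kmat m n A -> Kvec m b -> Kvec n c ->
  assumptionA m n A b c ->
  inK mu -> Kpos mu ->
  (exists x w y s : vec, central_path m n A b c mu x w y s) /\
  (forall x w y s : vec, central_path m n A b c mu x w y s ->
     primal_unique_optimal m n A b c mu x w /\
     dual_unique_optimal m n A b c mu y s).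
Proof.
  intros HA Hb Hc HAs Hmu Hmu0. split.
  - apply central_path_exists; auto.
  - intros x w y s Hcp. split.
    + exact (central_path_primal_unique_optimal _ _ _ _ _ _ _ _ _ _ Hmu0 Hcp).
    + exact (central_path_dual_unique_optimal _ _ _ _ _ _ _ _ _ _ Hmu0 Hcp).
Qed.
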